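(* Every AND-OR net, i.e. every net in $\mathbf S(\mathbf{pAND}\cup\mathbf{11tAND}\cup\mathbf{11pOR}\cup\mathbf{tOR})$, is sub-sound.
   Context: Petri nets and markings. A Petri net is a triple $(P,T,F)$ with $P$ a finite set of places, $T$ a finite set of transitions, $P\cap T=\emptyset$, and $F\subseteq (P\times T)\cup(T\times P)$. For a node $x$, $\bullet x=\{y\mid (y,x)\in F\}$, $x\bullet=\{y\mid (x,y)\in F\}$. A marking is a multiset over $P$ (a function $P\to\mathbb N$); sets of places are identified with bags of multiplicity one, $+,-,\le$ are pointwise, and $k.m$ is the sum of $k$ copies of $m$. Transition $t$ is enabled at $m$ iff $\bullet t\le m$, firing gives $m-\bullet t+t\bullet$, and $m\xrightarrow{*}m'$ denotes reachability by a finite (possibly empty) firing sequence. Workflow nets. A pWF net is $(P,T,F,I,O)$ with $(P,T,F)$ a Petri net, $I,O\subseteq P$ non-empty, every node reachable by a directed path from some node of $I$, and some node of $O$ reachable from every node. A tWF net is the same with $I,O$ non-empty subsets of $T$. Input nodes may have incoming edges and output nodes outgoing edges. A WF net is a pWF or tWF net; it is one-input (one-output) if $|I|=1$ ($|O|=1$). The place-completion $\mathrm{pc}(N)$ of a tWF net $N=(P,T,F,I,O)$ is obtained by adding two fresh places $p_i,p_o$ with edges $(p_i,t)$ for all $t\in I$ and $(t,p_o)$ for all $t\in O$, and taking input set $\{p_i\}$ and output set $\{p_o\}$. Sub-soundness. A pWF net is sub-sound if for all integers $k\ge k'\ge 0$ and every marking $m'$: if $k.I\xrightarrow{*}m'+k'.O$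 then $m'\xrightarrow{*}(k-k').O$. A tWF net is sub-sound iff its place-completion is. Substitution. Let $N=(P,T,F,I,O)$ and $M=(P',T',F',I',O')$ be WF nets with disjoint node sets. If $p\in P$ and $M$ is a pWF net, $N\otimes_p M$ is obtained from $N$ by deleting $p$ and all edges incident to $p$, adding all nodes and edges of $M$, adding an edge $(t,p')$ for each $t\in\bullet_N p$ and each $p'\in I'$, and an edge $(p',t)$ for each $p'\in O'$ and each $t\in p\bullet_N$; its input set is $(I\setminus\{p\})\cup I'$ if $p\in I$ and $I$ otherwise, and its output set is $(O\setminus\{p\})\cup O'$ if $p\in O$ and $O$ otherwise. If $t\in T$ and $M$ is a tWF net, $N\otimes_t M$ is defined analogously: delete $t$ and its edges, add $M$, add $(q,t')$ for each $q\in\bullet_N t$, $t'\in I'$, and $(t',q)$ for each $t'\in O'$, $q\in t\bullet_N$, with input/output sets updated in the same way. The substitution closure $\mathbf S(C)$ of a class $C$ of WF nets is the smallest superclass of $C$ such that whenever $N,M\in\mathbf S(C)$ are disjoint, $N\otimes_p M\in\mathbf S(C)$ for every place $p$ of $N$ if $M$ is a pWF net, and $N\otimes_t M\in\mathbf S(C)$ for every transition $t$ of $N$ if $M$ is a tWF net. AND and OR nets. An AND net is an acyclic WF net $(P,T,F,I,O)$ such that for every place $p$: (1) either $p\in I$ and $|\bullet p|=0$, or $p\notin I$ and $|\bullet p|=1$; and (2) either $p\in O$ and $|p\bullet|=0$, or $p\notin O$ and $|p\bullet|=1$. An OR net is a (possibly cyclic) WF net such that for every transition $t$: (1) either $t\in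 I$ and $|\bullet t|=0$, or $t\notin I$ and $|\bullet t|=1$; and (2) either $t\in O$ and $|t\bullet|=0$, or $t\notin O$ and $|t\bullet|=1$. A pAND (tAND, pOR, tOR) net is an AND (AND, OR, OR) net that is a pWF (tWF, pWF, tWF) net. $\mathbf{pAND}$ is the class of pAND nets, $\mathbf{11tAND}$ the class of one-input one-output tAND nets, $\mathbf{11pOR}$ the class of one-input one-output pOR nets, and $\mathbf{tOR}$ the class of tOR nets. *)

From mathcomp Require Import all_boot.
Set Implicit Arguments. Unset Strict Implicit. Unset Printing Implicit Defensive.

(* A net (P, T, F, I, O); sets are represented by sequences and used only
   through membership (duplicates / order are irrelevant). *)
Record net := Net {
  pl : seq nat;
  tr : seq nat;
  fl : seq (nat * nat);
  inp : seq nat;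
  outp : seq nat
}.

Definition node (N : net) (x : nat) : bool := (x \in pl N) || (x \in tr N).

Definition petri (N : net) : Prop :=
  (forall x, x \in pl N -> x \in tr N -> False) /\
  (forall x y, (x, y) \in fl N ->
     (x \in pl N /\ y \in tr N) \/ (x \in tr N /\ y \in pl N)).

Definition preset (N : net) (x : nat) : seq nat :=
  undup [seq e.1 | e <- fl N & e.2 == x].
Definition postset (N : net) (x : nat) : seq nat :=
  undup [seq e.2 | e <- fl N & e.1 == x].

Inductive fpath (N : net) : nat -> nat -> Prop :=
| fpath_refl x : fpath N x x
| fpath_step x y z : (x, y) \in fl N -> fpath N y z -> fpath N x z.

Definition wf_common (N : net) : Prop :=
  petri N /\
  (exists i, i \in inp N) /\ (exists o, o \in outp N) /\
  (forall x, node N x -> exists2 i, i \in inp N & fpath N i x) /\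
  (forall x, node N x -> exists2 o, o \in outp N & fpath N x o).

Definition pWF (N : net) : Prop :=
  wf_common N /\ {subset inp N <= pl N} /\ {subset outp N <= pl N}.
Definition tWF (N : net) : Prop :=
  wf_common N /\ {subset inp N <= tr N} /\ {subset outp N <= tr N}.
Definition WF (N : net) : Prop := pWF N \/ tWF N.

Definition one_input (N : net) : Prop := size (undup (inp N)) = 1.
Definition one_output (N : net) : Prop := size (undup (outp N)) = 1.

Definition acyclic (N : net) : Prop :=
  forall x y, (x, y) \in fl N -> ~ fpath N y x.

Definition AND_net (N : net) : Prop :=
  acyclic N /\ WF N /\
  forall p, p \in pl N ->
    ((p \in inp N /\ size (preset N p) = 0) \/
     (p \notin inp N /\ size (preset N p) = 1)) /\
    ((p \in outp N /\ size (postset N p) = 0) \/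
     (p \notin outp N /\ size (postset N p) = 1)).

Definition OR_net (N : net) : Prop :=
  WF N /\
  forall t, t \in tr N ->
    ((t \in inp N /\ size (preset N t) = 0) \/
     (t \notin inp N /\ size (preset N t) = 1)) /\
    ((t \in outp N /\ size (postset N t) = 0) \/
     (t \notin outp N /\ size (postset N t) = 1)).

Definition pAND (N : net) : Prop := AND_net N /\ pWF N.
Definition tAND11 (N : net) : Prop :=
  AND_net N /\ tWF N /\ one_input N /\ one_output N.
Definition pOR11 (N : net) : Prop :=
  OR_net N /\ pWF N /\ one_input N /\ one_output N.
Definition tOR (N : net) : Prop := OR_net N /\ tWF N.

Definition marking := nat -> nat.

Definition kset (k : nat) (S : seq nat) : marking := fun p => k * (p \in S).

Definition step (N : net) (m m' : marking) : Prop :=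
  exists2 t, t \in tr N &
    (forall p, ((p, t) \in fl N : nat) <= m p) /\
    (forall p, m' p = m p - ((p, t) \in fl N) + ((t, p) \in fl N)).

Inductive reach (N : net) : marking -> marking -> Prop :=
| reach_refl m m' : (forall p, m p = m' p) -> reach N m m'
| reach_step m1 m2 m3 : step N m1 m2 -> reach N m2 m3 -> reach N m1 m3.

Definition subsound_p (N : net) : Prop :=
  forall (k k' : nat) (m' : marking), k' <= k ->
    reach N (kset k (inp N)) (fun p => m' p + kset k' (outp N) p) ->
    reach N m' (kset (k - k') (outp N)).

(* place-completion, with fresh places pi = f and po = f+1 where f exceeds
   every node name of N *)
Definition fresh (N : net) : nat := (foldr maxn 0 (pl N ++ tr N)).+1.
Definition pc (N : net) : net :=
  let pi := fresh N in let po := (fresh N).+1 in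
  Net (pi :: po :: pl N) (tr N)
      ([seq (pi, t) | t <- inp N] ++ [seq (t, po) | t <- outp N] ++ fl N)
      [:: pi] [:: po].

Definition subsound (N : net) : Prop :=
  (pWF N -> subsound_p N) /\ (tWF N -> subsound_p (pc N)).

Definition disjoint_nets (N M : net) : Prop :=
  forall x, node N x -> node M x -> False.

Definition is_subst_place (N M : net) (p : nat) (R : net) : Prop :=
  (forall x, x \in pl R <-> (x \in pl N /\ x != p) \/ x \in pl M) /\
  (forall x, x \in tr R <-> x \in tr N \/ x \in tr M) /\
  (forall x y, (x, y) \in fl R <->
     ((x, y) \in fl N /\ x != p /\ y != p) \/ (x, y) \in fl M \/
     ((x, p) \in fl N /\ y \in inp M) \/ (x \in outp M /\ (p, y) \in fl N)) /\
  (forall x, x \in inp R <->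
     if p \in inp N then (x \in inp N /\ x != p) \/ x \in inp M
     else x \in inp N) /\
  (forall x, x \in outp R <->
     if p \in outp N then (x \in outp N /\ x != p) \/ x \in outp M
     else x \in outp N).

Definition is_subst_trans (N M : net) (t : nat) (R : net) : Prop :=
  (forall x, x \in pl R <-> x \in pl N \/ x \in pl M) /\
  (forall x, x \in tr R <-> (x \in tr N /\ x != t) \/ x \in tr M) /\
  (forall x y, (x, y) \in fl R <->
     ((x, y) \in fl N /\ x != t /\ y != t) \/ (x, y) \in fl M \/
     ((x, t) \in fl N /\ y \in inp M) \/ (x \in outp M /\ (t, y) \in fl N)) /\
  (forall x, x \in inp R <->
     if t \in inp N then (x \in inp N /\ x != t) \/ x \in inp M
     else x \in inp N) /\
  (forall x, x \in outp R <->
     if t \in outp N then (x \in outp N /\ x != t) \/ x \in outp M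
     else x \in outp N).

Inductive Sclos (C : net -> Prop) : net -> Prop :=
| Sclos_base N : C N -> Sclos C N
| Sclos_place N M p R : Sclos C N -> Sclos C M -> disjoint_nets N M ->
    p \in pl N -> pWF M -> is_subst_place N M p R -> Sclos C R
| Sclos_trans N M t R : Sclos C N -> Sclos C M -> disjoint_nets N M ->
    t \in tr N -> tWF M -> is_subst_trans N M t R -> Sclos C R.

Definition AND_OR_base (N : net) : Prop := pAND N \/ tAND11 N \/ pOR11 N \/ tOR N.
Definition AND_OR_net (N : net) : Prop := Sclos AND_OR_base N.

From Pilot Require Import Defs.
From mathcomp Require Import all_boot.
From mathcomp Require Import zify.
From Stdlib Require Import Classical ClassicalEpsilon.
Set Implicit Arguments. Unset Strict Implicit. Unset Printing Implicit Defensive.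

(* The proof works with an abstract notion of net ("u-net") whose places are
   the positions [pos := nat + bool]: [inl x] is the place x of a concrete
   net, while [inr false] / [inr true] are the fresh input / output places of
   a place-completion.  A pWF net is encoded with flag [false] (its own places
   are the interface), a tWF net with flag [true] (its place-completion is
   the interface); sub-soundness of the encoding is exactly [subsound]. *)

Notation X := (nat + bool)%type.
Definition umark := X -> nat.

Record unet := UNet { uT : nat -> Prop; upre : nat -> X -> bool; upost : nat -> X -> bool }.

Definition ustep (U : unet) (m m' : umark) : Prop :=
  exists2 t, uT U t & (forall z, upre U t z <= m z) /\
                      (forall z, m' z = m z - upre U t z + upost U t z).

Inductive ureach (U : unet) : umark -> umark -> Prop :=
| ur_refl m m' : (forall z, m z = m' z) -> ureach U m m'
| ur_step m1 m2 m3 : ustep U m1 m2 -> ureach U m2 m3 -> ureach U m1 m3.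

Definition usub (U : unet) (I O : X -> bool) : Prop :=
  forall k k' (m' : umark), k' <= k ->
   ureach U (fun z => k * I z) (fun z => m' z + k' * O z) ->
   ureach U m' (fun z => (k - k') * O z).

Section Basic.
Variable U : unet.

Lemma ustep_ext m1 m2 m1' m2' : ustep U m1 m2 -> (forall z, m1 z = m1' z) ->
  (forall z, m2 z = m2' z) -> ustep U m1' m2'.
Proof.
move=> [t Ht [H1 H2]] E1 E2; exists t => //; split => z; first by rewrite -E1.
by rewrite -E2 -E1.
Qed.

Lemma ureach_ext m1 m2 m1' m2' : ureach U m1 m2 -> (forall z, m1 z = m1' z) ->
  (forall z, m2 z = m2' z) -> ureach U m1' m2'.
Proof.
move=> H; elim: H m1' m2' => [a b E|a b c S R IH] m1' m2' E1 E2.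
  by apply: ur_refl => z; rewrite -E1 -E2.
apply: ur_step (IH b m2' (fun z => erefl) E2).
by apply: ustep_ext S E1 (fun z => erefl).
Qed.

Lemma ureach_trans a b c : ureach U a b -> ureach U b c -> ureach U a c.
Proof.
move=> H; elim: H c => [x y E|x y w S R IH] c H2.
  by apply: ureach_ext H2 _ (fun z => erefl) => z; rewrite E.
by apply: ur_step S (IH _ H2).
Qed.

Lemma ustep_add m m2 (a : umark) : ustep U m m2 ->
  ustep U (fun z => m z + a z) (fun z => m2 z + a z).
Proof.
move=> [t Ht [H1 H2]]; exists t => //; split => z.
  by apply: leq_trans (H1 z) (leq_addr _ _).
rewrite H2; have := H1 z; lia.
Qed.

Lemma ureach_add m m2 (a : umark) : ureach U m m2 ->
  ureach U (fun z => m z + a z) (fun z => m2 z + a z).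
Proof.
move=> H; elim: H => [x y E|x y w S R IH].
  by apply: ur_refl => z; rewrite E.
by apply: ur_step (ustep_add a S) IH.
Qed.

Lemma ureach_plus a b c d : ureach U a b -> ureach U c d ->
  ureach U (fun z => a z + c z) (fun z => b z + d z).
Proof.
move=> H1 H2; apply: ureach_trans (ureach_add c H1) _.
apply: ureach_ext (ureach_add b H2) _ _ => z /=; lia.
Qed.

Lemma ureach_const z m1 m2 : (forall t, uT U t -> ~~ upre U t z /\ ~~ upost U t z) ->
  ureach U m1 m2 -> m1 z = m2 z.
Proof.
move=> Hz H; elim: H => [x y E|x y w [t Ht [H1 H2]] R IH]; first by [].
by rewrite -IH H2; case: (Hz t Ht) => /negbTE -> /negbTE ->; rewrite subn0 addn0.
Qed.

Lemma ureach_nonzero a b : (forall t, uT U t -> exists z, upost U t z) ->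
  ureach U a b -> (exists z, 0 < a z) -> exists z, 0 < b z.
Proof.
move=> Hp H; elim: H => [x y E|x y w [t Ht [H1 H2]] R IH] Hnz.
  by case: Hnz => z Hz; exists z; rewrite -E.
apply: IH; case: (Hp t Ht) => z Hz; exists z; rewrite H2 Hz; lia.
Qed.

Lemma noexcess I O j l (a : umark) : usub U I O ->
  (forall t, uT U t -> exists z, upost U t z) -> (exists z, O z) ->
  ureach U (fun z => j * I z) (fun z => a z + l * O z) -> l <= j.
Proof.
move=> Hs Hp [o Ho] H; rewrite leqNgt; apply/negP => Hlt.
have H' : ureach U (fun z => j * I z) (fun z => (a z + (l - j) * O z) + j * O z).
  apply: ureach_ext H (fun z => erefl) _ => z; rewrite mulnBl; case: (O z); lia.
have := Hs j j _ (leqnn j) H'.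
move/(ureach_nonzero Hp) => [|z]; first by exists o; rewrite Ho; lia.
by rewrite subnn mul0n.
Qed.

Lemma one_token I O : usub U I O -> ureach U (fun z => I z) (fun z => O z).
Proof.
move=> Hs; have := Hs 1 0 (fun z => I z) (leq0n 1).
move=> H; apply: ureach_ext (H _) _ _ => //= [|z]; last by rewrite mul1n.
by apply: ur_refl => z; rewrite mul1n mul0n addn0.
Qed.

Lemma usub_ext I O I' O' : usub U I O -> (forall z, I z = I' z) -> (forall z, O z = O' z) ->
  usub U I' O'.
Proof.
move=> Hs EI EO k k' m' Hk H; apply: ureach_ext (Hs k k' m' Hk _) _ _ => // [|z].
  by apply: ureach_ext H _ _ => z; rewrite ?EI ?EO.
by rewrite EO.
Qed.

End Basic.

(* UR is obtained from UN by replacing the position p by the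
   net UM, whose positions are those satisfying inM: a transition of UN
   consuming (producing) p consumes from OM (produces into IM) instead. *)
Section PlaceComp.
Variables UR UN UM : unet.
Variables IR OR IN ON IM OM : X -> bool.
Variable p : X.
Variable inM : X -> bool.
Hypothesis HT : forall t, uT UR t <-> uT UN t \/ uT UM t.
Hypothesis HMpre : forall t, uT UM t -> forall z, upre UR t z = upre UM t z.
Hypothesis HMpost : forall t, uT UM t -> forall z, upost UR t z = upost UM t z.
Hypothesis HMin : forall t, uT UM t -> forall z, (upre UM t z -> inM z) /\ (upost UM t z -> inM z).
Hypothesis HNpre : forall t, uT UN t -> forall z,
  upre UR t z = if inM z then upre UN t p && OM z else (z != p) && upre UN t z.
Hypothesis HNpost : forall t, uT UN t -> forall z,
  upost UR t z = if inM z then upost UN t p && IM z else (z != p) && upost UN t z.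
Hypothesis HNin : forall t, uT UN t -> forall z, inM z -> ~~ upre UN t z /\ ~~ upost UN t z.
Hypothesis Hp : ~~ inM p.
Hypothesis HIM : forall z, IM z -> inM z.
Hypothesis HOM : forall z, OM z -> inM z.
Hypothesis HIR : forall z, IR z = if inM z then IN p && IM z else (z != p) && IN z.
Hypothesis HOR : forall z, OR z = if inM z then ON p && OM z else (z != p) && ON z.
Hypothesis HINM : forall z, inM z -> ~~ IN z /\ ~~ ON z.
Hypothesis HsN : usub UN IN ON.
Hypothesis HsM : usub UM IM OM.
Hypothesis HpostM : forall t, uT UM t -> exists z, upost UM t z.
Hypothesis HOMne : exists z, OM z.

Definition Mp (m : umark) : umark := fun z => if inM z then m z else 0.

Lemma nIM z : ~~ inM z -> IM z = false.
Proof. by move=> H; apply/negbTE/negP => /HIM; rewrite (negbTE H). Qed.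
Lemma nOM z : ~~ inM z -> OM z = false.
Proof. by move=> H; apply/negbTE/negP => /HOM; rewrite (negbTE H). Qed.
Lemma nMpre t z : uT UM t -> ~~ inM z -> upre UM t z = false.
Proof. by move=> Ht H; apply/negbTE/negP => /(proj1 (HMin Ht z)); rewrite (negbTE H). Qed.
Lemma nMpost t z : uT UM t -> ~~ inM z -> upost UM t z = false.
Proof. by move=> Ht H; apply/negbTE/negP => /(proj2 (HMin Ht z)); rewrite (negbTE H). Qed.

Lemma liftM a w : ureach UM a w -> forall m, (forall z, inM z -> m z = a z) ->
  exists2 m1, ureach UR m m1 & (forall z, inM z -> m1 z = w z) /\ (forall z, ~~ inM z -> m1 z = m z).
Proof.
move=> H; elim: H => [x y E|x y w' [t Ht [G1 G2]] R IH] m Hm.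
  exists m; first by apply: ur_refl.
  by split => // z Hz; rewrite Hm // E.
pose m2 := fun z => m z - upre UR t z + upost UR t z.
have Hm2 : forall z, inM z -> m2 z = y z.
  by move=> z Hz; rewrite /m2 G2 Hm // HMpre // HMpost.
case: (IH m2 Hm2) => m1 R1 [E1 E2]; exists m1; last split => //.
  apply: ur_step R1; exists t; first by apply/HT; right.
  split => // z; rewrite HMpre //; case Hz: (inM z); first by rewrite Hm // G1.
  by rewrite nMpre // Hz.
by move=> z Hz; rewrite E2 // /m2 HMpre // HMpost // !nMpre // ?nMpost // subn0 addn0.
Qed.

(* Forward simulation: a marking m reachable from k.IR splits into a marking n
   of UN reachable from k.IN, which puts n p tokens on p, and a run of UM
   from j.IM (j = n p + l tokens sent into UM so far) to the UM-part of m plus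
   l tokens already returned by UM to p. *)
Definition FInv k (m : umark) := exists n, exists j, exists l,
  [/\ ureach UN (fun z => k * IN z) n, (forall z, ~~ inM z -> z != p -> m z = n z),
      n p + l = j & ureach UM (fun z => j * IM z) (fun z => Mp m z + l * OM z)].

Lemma FInv_ext k m m' : FInv k m -> (forall z, m z = m' z) -> FInv k m'.
Proof.
move=> [n [j [l [H1 H2 H3 H4]]]] E; exists n, j, l; split => //.
  by move=> z Hz Hp'; rewrite -E H2.
by apply: ureach_ext H4 _ _ => // z; rewrite /Mp E.
Qed.

Lemma Finit k : FInv k (fun z => k * IR z).
Proof.
exists (fun z => k * IN z), (k * IN p), 0; split => //.
- by apply: ur_refl.
- by move=> z Hz Hzp; rewrite HIR (negbTE Hz) Hzp.
- by rewrite addn0.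
- apply: ur_refl => z; rewrite /Mp HIR mul0n addn0.
  case Hz: (inM z) => //; last by rewrite nIM ?Hz // muln0.
  by case: (IN p); case: (IM z); rewrite ?muln0 ?muln1 ?mul0n.
Qed.

(* Firing a transition of UN: it fires in UN, and tokens it consumes from OM
   (produces into IM) count as returned by (sent into) UM. *)
Lemma Fstep_N k m t : FInv k m -> uT UN t -> (forall z, upre UR t z <= m z) ->
  forall m2, (forall z, m2 z = m z - upre UR t z + upost UR t z) -> FInv k m2.
Proof.
move=> [n [j [l [HN Hag Hnp HM]]]] Ht H1 m2 H2.
set a := upre UN t p; set b := upost UN t p.
have HaO : forall z, OM z -> a <= m z.
  by move=> z Hz; apply: leq_trans (H1 z); rewrite (HNpre Ht) (HOM Hz) Hz andbT.
have HM' : ureach UM (fun z => j * IM z) (fun z => (Mp m z - a * OM z) + (l + a) * OM z).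
  apply: ureach_ext HM _ _ => // z; rewrite /Mp.
  case Hz: (OM z); last by rewrite /=; lia.
  rewrite (HOM Hz) !muln1; have := HaO z Hz; lia.
have Hle := noexcess HsM HpostM HOMne HM'.
pose n2 := fun z => n z - upre UN t z + upost UN t z.
exists n2, (j + b), (l + a); split.
- apply: ureach_trans HN (ur_step _ (ur_refl _ (fun z => erefl))).
  exists t => //; split => // z.
  case Hz: (inM z); first by rewrite (negbTE (proj1 (HNin Ht Hz))).
  case Hzp: (z == p); first by rewrite (eqP Hzp) -/a; lia.
  have := H1 z; rewrite HNpre // Hz Hzp /= Hag ?Hz ?Hzp //.
- move=> z Hz Hzp; rewrite H2 /n2 HNpre // HNpost // (negbTE Hz) Hzp /= Hag //.
- rewrite /n2 -/a -/b; lia.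
- apply: ureach_ext (ureach_add (fun z => b * IM z) HM') _ _ => z /=; first by rewrite mulnDl.
  rewrite /Mp H2 HNpre // HNpost //; case Hz: (inM z); last first.
    have Hz' : ~~ inM z by rewrite Hz.
    by rewrite nIM // nOM //=; lia.
  have := HaO z; rewrite -/a -/b.
  by case: (OM z); case: (IM z); rewrite /= ?andbT ?andbF /=; lia.
Qed.

Lemma Fstep_M k m t : FInv k m -> uT UM t -> (forall z, upre UR t z <= m z) ->
  forall m2, (forall z, m2 z = m z - upre UR t z + upost UR t z) -> FInv k m2.
Proof.
move=> [n [j [l [HN Hag Hnp HM]]]] Ht H1 m2 H2.
exists n, j, l; split => //.
- move=> z Hz Hzp; rewrite H2 HMpre // HMpost // nMpre // nMpost // subn0 addn0; exact: Hag.
- apply: ureach_trans HM (ur_step _ (ur_refl _ (fun z => erefl))).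
  apply: (ustep_add (fun z => l * OM z)); exists t => //; split => z; rewrite /Mp.
    case Hz: (inM z); first by rewrite -HMpre // H1.
    by rewrite nMpre // Hz.
  rewrite H2 HMpre // HMpost //; case Hz: (inM z) => //.
  by rewrite nMpre ?nMpost // Hz.
Qed.

Lemma Fstep k m m2 : FInv k m -> ustep UR m m2 -> FInv k m2.
Proof.
move=> HF [t HtR [H1 H2]].
by case/HT: HtR => Ht; [apply: Fstep_N HF Ht H1 m2 H2 | apply: Fstep_M HF Ht H1 m2 H2].
Qed.

Lemma Freach k m0 m : ureach UR m0 m -> FInv k m0 -> FInv k m.
Proof.
move=> H; elim: H => [x y E|x y w S R IH] Hx; first exact: FInv_ext Hx E.
by apply: IH; apply: Fstep Hx S.
Qed.

(* Backward simulation: m agrees with a marking n of UN outside UM and p,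
   and the UM-part of m can be emptied into n p tokens on OM. *)
Definition BRel (m n : umark) :=
  (forall z, ~~ inM z -> z != p -> m z = n z) /\ ureach UM (Mp m) (fun z => n p * OM z).

(* Every run of UN lifts to a run of UR, one UM-completion per step. *)
Lemma blift n n2 : ureach UN n n2 -> forall m, BRel m n ->
  exists2 m2, ureach UR m m2 & BRel m2 n2.
Proof.
have Hone := one_token HsM.
move=> H; elim: H => [x y E|x y w [t Ht [G1 G2]] R IH] m [Hag HMr].
  exists m; first by apply: ur_refl.
  split; first by move=> z Hz Hzp; rewrite -E Hag.
  by apply: ureach_ext HMr _ _ => // z; rewrite E.
case: (liftM HMr (m := m) (fun z Hz => _)) => [z Hz|m1 R1 [E1 E2]]; first by rewrite /Mp Hz.
set a := upre UN t p; set b := upost UN t p.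
pose m2 := fun z => m1 z - upre UR t z + upost UR t z.
have S : ustep UR m1 m2.
  exists t; first by apply/HT; left.
  split => // z; rewrite HNpre //; case Hz: (inM z).
    rewrite E1 //; move: (G1 p); rewrite -/a.
    by case: (OM z); rewrite /= ?andbT ?andbF ?muln1 ?muln0.
  case Hzp: (z == p) => //=; rewrite E2 ?Hz // Hag ?Hz ?Hzp //.
case: (IH m2) => [|m3 R3 B3]; last first.
  by exists m3 => //; apply: ureach_trans R1 (ur_step S R3).
split.
  move=> z Hz Hzp; rewrite /m2 HNpre // HNpost // (negbTE Hz) Hzp /= E2 // Hag //.
have Hb : ureach UM (fun z => b * IM z) (fun z => b * OM z).
  case: b; first by apply: ureach_ext Hone _ _ => z; rewrite mul1n.
  by apply: ur_refl => z; rewrite !mul0n.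
apply: ureach_ext (ureach_plus (ur_refl UM (fun z => erefl ((x p - a) * OM z))) Hb) _ _ => z.
  rewrite /Mp /m2 HNpre // HNpost //; case Hz: (inM z); last first.
    have Hz' : ~~ inM z by rewrite Hz.
    by rewrite nIM // nOM //=; lia.
  rewrite E1 //; have := G1 p; rewrite -/a -/b.
  by case: (OM z); case: (IM z); rewrite /= ?andbT ?andbF /=; lia.
rewrite G2 -/a -/b -mulnDl; congr (_ * _); have := G1 p; rewrite -/a; lia.
Qed.

Lemma p_untouched t : uT UR t -> ~~ upre UR t p /\ ~~ upost UR t p.
Proof.
case/HT=> Ht; first by rewrite HNpre // HNpost // (negbTE Hp) eqxx.
by rewrite HMpre // HMpost // !nMpre ?nMpost.
Qed.

(* Given k.IR ->* m' + k'.OR: the forward simulation yields runs of UN and UM;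
   sub-soundness of UM empties UM, that of UN then finishes in UN, and the
   backward simulation replays the latter in UR. *)
Lemma place_comp : usub UR IR OR.
Proof.
move=> k k' m' Hk H.
have Hp0 : m' p = 0.
  by have := ureach_const p_untouched H; rewrite HIR HOR (negbTE Hp) eqxx /=; lia.
case: (Freach H (Finit k)) => n [j [l [HN Hag Hnp HM]]].
have HM1 : ureach UM (fun z => j * IM z) (fun z => Mp m' z + (l + k' * ON p) * OM z).
  apply: ureach_ext HM _ _ => // z; rewrite /Mp HOR; case Hz: (inM z).
    by case: (ON p); case: (OM z) => /=; rewrite ?muln0 ?muln1 ?mul0n; lia.
  by rewrite nOM ?Hz // !muln0.
have Hle := noexcess HsM HpostM HOMne HM1.
have HM2 := HsM Hle HM1.
pose n' := fun z => n z - k' * ON z.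
have Hn : forall z, k' * ON z <= n z.
  move=> z; case Hz: (inM z); first by rewrite (negbTE (proj2 (HINM Hz))) muln0.
  case Hzp: (z == p); first by rewrite (eqP Hzp); lia.
  by rewrite -Hag ?Hz ?Hzp // HOR Hz Hzp /=; lia.
have HN' : ureach UN (fun z => k * IN z) (fun z => n' z + k' * ON z).
  by apply: ureach_ext HN _ _ => // z; rewrite /n' subnK.
have HN2 := HsN Hk HN'.
have HB : BRel m' n'.
  split.
    move=> z Hz Hzp; rewrite /n' -Hag // HOR (negbTE Hz) Hzp /=; lia.
  apply: ureach_ext HM2 _ _ => // z; rewrite /n'; congr (_ * _); lia.
case: (blift HN2 HB) => m2 R2 [Ag2 HM3].
have HE : forall z, inM z -> m2 z = Mp m2 z by move=> z Hz; rewrite /Mp Hz.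
case: (liftM HM3 HE) => m3 R3 [E1 E2].
have Hm2p : m2 p = 0.
  by rewrite -Hp0 -(ureach_const p_untouched R2).
apply: ureach_trans R2 (ureach_ext R3 (fun z => erefl) _) => z.
rewrite HOR; case Hz: (inM z).
  by rewrite E1 //; case: (OM z); case: (ON p); rewrite /= ?muln0 ?muln1.
rewrite E2 ?Hz //; case Hzp: (z == p) => /=.
  by rewrite muln0 (eqP Hzp).
by rewrite Ag2 ?Hz ?Hzp.
Qed.

End PlaceComp.

(* UR is obtained from UN by replacing the transition
   t0 by the net UM, whose own positions satisfy inM and whose interface is a
   source position vi and a sink position vo outside it: consuming from vi
   (producing into vo) in UM becomes consuming the preset (producing the
   postset) of t0. *)
Section TransComp.
Variables UR UN UM : unet.
Variables IR OR IN ON : X -> bool.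
Variables vi vo : X.
Variable t0 : nat.
Variable inM : X -> bool.
Hypothesis HT : forall t, uT UR t <-> (uT UN t /\ t <> t0) \/ uT UM t.
Hypothesis Ht0 : uT UN t0.
Hypothesis HMpre : forall t, uT UM t -> forall z,
  upre UR t z = if inM z then upre UM t z else upre UM t vi && upre UN t0 z.
Hypothesis HMpost : forall t, uT UM t -> forall z,
  upost UR t z = if inM z then upost UM t z else upost UM t vo && upost UN t0 z.
Hypothesis HMin : forall t, uT UM t -> forall z,
  (upre UM t z -> inM z \/ z = vi) /\ (upost UM t z -> inM z \/ z = vo).
Hypothesis Hvi : ~~ inM vi.
Hypothesis Hvo : ~~ inM vo.
Hypothesis Hvio : vi != vo.
Hypothesis HNin : forall t, uT UN t -> forall z, inM z -> ~~ upre UN t z /\ ~~ upost UN t z.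
Hypothesis HNpre : forall t, uT UN t -> t <> t0 -> forall z, upre UR t z = upre UN t z.
Hypothesis HNpost : forall t, uT UN t -> t <> t0 -> forall z, upost UR t z = upost UN t z.
Hypothesis HIR : forall z, IR z = ~~ inM z && IN z.
Hypothesis HOR : forall z, OR z = ~~ inM z && ON z.
Hypothesis HINM : forall z, inM z -> ~~ IN z /\ ~~ ON z.
Hypothesis HsN : usub UN IN ON.
Hypothesis HsM : usub UM (fun z => z == vi) (fun z => z == vo).
Hypothesis HpostM : forall t, uT UM t -> exists z, upost UM t z.

Definition MpT (m : umark) : umark := fun z => if inM z then m z else 0.

Lemma Mpre_vo t : uT UM t -> upre UM t vo = false.
Proof.
move=> Ht; apply/negbTE/negP => /(proj1 (HMin Ht vo)) [H|H].
  by move: Hvo; rewrite H.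
by move: Hvio; rewrite H eqxx.
Qed.
Lemma Mpost_vi t : uT UM t -> upost UM t vi = false.
Proof.
move=> Ht; apply/negbTE/negP => /(proj2 (HMin Ht vi)) [H|H].
  by move: Hvi; rewrite H.
by move: Hvio; rewrite H eqxx.
Qed.
Lemma Mpre_out t z : uT UM t -> ~~ inM z -> z != vi -> upre UM t z = false.
Proof.
move=> Ht Hz Hzi; apply/negbTE/negP => /(proj1 (HMin Ht z)) [H|H].
  by rewrite H in Hz.
by rewrite H eqxx in Hzi.
Qed.
Lemma Mpost_out t z : uT UM t -> ~~ inM z -> z != vo -> upost UM t z = false.
Proof.
move=> Ht Hz Hzi; apply/negbTE/negP => /(proj2 (HMin Ht z)) [H|H].
  by rewrite H in Hz.
by rewrite H eqxx in Hzi.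
Qed.
Lemma N0pre z : inM z -> upre UN t0 z = false.
Proof. by move=> Hz; apply/negbTE; case: (HNin Ht0 Hz). Qed.

(* A run of UM lifts to UR; each token taken from vi consumes the preset of t0
   and each token put on vo produces its postset. *)
Lemma liftMT (a w : umark) : ureach UM a w -> forall m, (forall z, inM z -> m z = a z) ->
  (forall z, ~~ inM z -> a vi * upre UN t0 z <= m z) ->
  exists2 m1, ureach UR m m1 &
    [/\ (forall z, inM z -> m1 z = w z),
        (forall z, ~~ inM z -> m1 z + (a vi - w vi) * upre UN t0 z
                               = m z + (w vo - a vo) * upost UN t0 z),
        w vi <= a vi & a vo <= w vo].
Proof.
move=> H; elim: H => [x y E|x y w' [t Ht [G1 G2]] R IH] m Hm Hle.
  exists m; first by apply: ur_refl.
  split => [z Hz|z Hz||]; rewrite -?E ?subnn ?mul0n ?leqnn //.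
  by rewrite Hm.
pose m2 := fun z => m z - upre UR t z + upost UR t z.
have S : ustep UR m m2.
  exists t; first by apply/HT; right.
  split => // z; rewrite HMpre //; case Hz: (inM z); first by rewrite Hm.
  have := Hle z (negbT Hz); have := G1 vi.
  by case: (upre UM t vi); case: (upre UN t0 z) => /=; lia.
have Hyvi : y vi = x vi - (upre UM t vi) by rewrite G2 Mpost_vi // addn0.
have Hyvo : y vo = x vo + (upost UM t vo) by rewrite G2 Mpre_vo // subn0.
case: (IH m2) => [z Hz|z Hz|m1 R1 [E1 E2 E3 E4]].
- by rewrite /m2 HMpre // HMpost // Hz G2 Hm.
- rewrite Hyvi /m2 HMpre // HMpost // (negbTE Hz); have := Hle z Hz; have := G1 vi.
  case: (upre UM t vi); case: (upost UM t vo);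
    case: (upre UN t0 z); case: (upost UN t0 z) => /=; lia.
exists m1; first by apply: ur_step S R1.
split => // [z Hz||]; last 2 first.
- by apply: leq_trans E3 _; rewrite Hyvi leq_subr.
- by apply: leq_trans E4; rewrite Hyvo leq_addr.
have := E2 z Hz; rewrite Hyvi Hyvo /m2 HMpre // HMpost // (negbTE Hz).
have := Hle z Hz; have := G1 vi; move: E3 E4; rewrite Hyvi Hyvo.
by case: (upre UM t vi); case: (upost UM t vo);
    case: (upre UN t0 z); case: (upost UN t0 z) => /=; lia.
Qed.

(* Forward simulation: m is the marking n of a run of UN from k.IN, outside
   UM, minus the postset of the j - l occurrences of t0 that UM has started
   (j tokens taken from vi) but not yet completed (l tokens put on vo). *)
Definition FInvT k (m : umark) := exists n, exists j, exists l,
  [/\ ureach UN (fun z => k * IN z) n,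
      (forall z, ~~ inM z -> n z = m z + (j - l) * upost UN t0 z), l <= j &
      ureach UM (fun z => j * (z == vi)) (fun z => MpT m z + l * (z == vo))].

Lemma FInvT_ext k m m' : FInvT k m -> (forall z, m z = m' z) -> FInvT k m'.
Proof.
move=> [n [j [l [H1 H2 H3 H4]]]] E; exists n, j, l; split => //.
  by move=> z Hz; rewrite -E H2.
by apply: ureach_ext H4 _ _ => // z; rewrite /MpT E.
Qed.

Lemma FinitT k : FInvT k (fun z => k * IR z).
Proof.
exists (fun z => k * IN z), 0, 0; split => //.
- by apply: ur_refl.
- by move=> z Hz; rewrite HIR Hz /= subnn mul0n addn0.
- apply: ur_refl => z; rewrite /MpT HIR; case Hz: (inM z) => //=; lia.
Qed.

Lemma FstepT_N k m t : FInvT k m -> uT UN t -> t <> t0 -> (forall z, upre UR t z <= m z) ->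
  forall m2, (forall z, m2 z = m z - upre UR t z + upost UR t z) -> FInvT k m2.
Proof.
move=> [n [j [l [HN Hag Hlj HM]]]] Ht Htt0 H1 m2 H2.
pose n2 := fun z => n z - upre UN t z + upost UN t z.
exists n2, j, l; split => //.
- apply: ureach_trans HN (ur_step _ (ur_refl _ (fun z => erefl))).
  exists t => //; split => // z.
  case Hz: (inM z); first by rewrite (negbTE (proj1 (HNin Ht Hz))).
  rewrite Hag ?Hz // -(HNpre Ht Htt0); apply: leq_trans (H1 z) (leq_addr _ _).
- move=> z Hz; rewrite /n2 Hag // H2 (HNpre Ht Htt0) (HNpost Ht Htt0).
  have := H1 z; rewrite (HNpre Ht Htt0); lia.
- apply: ureach_ext HM _ _ => // z; rewrite /MpT H2; case Hz: (inM z) => //.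
  rewrite HNpre // HNpost //; case: (HNin Ht Hz) => /negbTE -> /negbTE ->.
  by rewrite subn0 addn0.
Qed.

(* Firing a transition of UM extends the run of UM; if it takes a token from
   vi, the corresponding occurrence of t0 is fired in UN. *)
Lemma FstepT_M k m t : FInvT k m -> uT UM t -> (forall z, upre UR t z <= m z) ->
  forall m2, (forall z, m2 z = m z - upre UR t z + upost UR t z) -> FInvT k m2.
Proof.
move=> [n [j [l [HN Hag Hlj HM]]]] Ht H1 m2 H2.
have HM2 : ureach UM (fun z => (j + (upre UM t vi)) * (z == vi))
                     (fun z => MpT m2 z + (l + (upost UM t vo)) * (z == vo)).
  apply: ureach_trans
    (ureach_ext (ureach_add (fun z => upre UM t vi * (z == vi)) HM) _ (fun z => erefl)) _.
    by move=> z; rewrite mulnDl.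
  apply: ur_step (ur_refl _ (fun z => erefl)); exists t => //; split => z.
    rewrite /MpT; case Hz: (inM z).
      have := H1 z; rewrite HMpre // Hz; lia.
    case Hzi: (z == vi); first by rewrite (eqP Hzi); lia.
    by rewrite Mpre_out ?Hz ?Hzi.
  rewrite /MpT H2 HMpre // HMpost //; case Hz: (inM z).
    have Hzi : (z == vi) = false by apply/negbTE/eqP => E; move: Hvi; rewrite -E Hz.
    have Hzo : (z == vo) = false by apply/negbTE/eqP => E; move: Hvo; rewrite -E Hz.
    by rewrite Hzi Hzo /= !muln0 !addn0.
  case Hzi: (z == vi).
    rewrite (eqP Hzi) (negbTE Hvio) Mpost_vi // /=; lia.
  case Hzo: (z == vo).
    rewrite (eqP Hzo) Mpre_vo // /=; lia.
  have Hz2 : ~~ inM z by rewrite Hz.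
  by rewrite (Mpre_out Ht Hz2 (negbT Hzi)) (Mpost_out Ht Hz2 (negbT Hzo)) /=; lia.
have Hle := noexcess HsM HpostM (ex_intro _ vo (eqxx vo)) HM2.
pose n2 := fun z => n z - (upre UM t vi) * upre UN t0 z + (upre UM t vi) * upost UN t0 z.
exists n2, (j + (upre UM t vi)), (l + (upost UM t vo)); split => //.
- apply: ureach_trans HN _; rewrite /n2; move: (H1) (H2).
  case Hc: (upre UM t vi) => H1' H2'; last first.
    by apply: ur_refl => z /=; rewrite !mul0n subn0 addn0.
  apply: ur_step (ur_refl _ (fun z => erefl)); exists t0 => //; split => z.
    case Hz: (inM z); first by rewrite N0pre.
    rewrite Hag ?Hz //; have := H1' z; rewrite HMpre // Hz Hc /=; lia.
  by rewrite /=; lia.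
- move=> z Hz; rewrite /n2 Hag // H2 HMpre // HMpost // (negbTE Hz).
  have := H1 z; rewrite HMpre // (negbTE Hz) ; move: Hle Hlj.
  by case: (upre UM t vi); case: (upost UM t vo);
    case: (upre UN t0 z); case: (upost UN t0 z) => /=; lia.
Qed.

Lemma FstepT k m m2 : FInvT k m -> ustep UR m m2 -> FInvT k m2.
Proof.
move=> HF [t HtR [H1 H2]].
case/HT: HtR => [[Ht Htt0]|Ht]; first exact: FstepT_N HF Ht Htt0 H1 m2 H2.
exact: FstepT_M HF Ht H1 m2 H2.
Qed.

Lemma FreachT k m0 m : ureach UR m0 m -> FInvT k m0 -> FInvT k m.
Proof.
move=> H; elim: H => [x y E|x y w S R IH] Hx; first exact: FInvT_ext Hx E.
by apply: IH; apply: FstepT Hx S.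
Qed.

Definition BRelT (m n : umark) :=
  (forall z, ~~ inM z -> m z = n z) /\ (forall z, inM z -> m z = 0).

(* Every run of UN lifts to UR; an occurrence of t0 becomes a complete run of
   UM from vi to vo. *)
Lemma bliftT n n2 : ureach UN n n2 -> forall m, BRelT m n ->
  exists2 m2, ureach UR m m2 & BRelT m2 n2.
Proof.
have Hone := one_token HsM.
move=> H; elim: H => [x y E|x y w [t Ht [G1 G2]] R IH] m [Hag Hm0].
  by exists m; [apply: ur_refl | split => // z Hz; rewrite -E Hag].
have [Htt0|Htt0] := eqVneq t t0.
- subst t.
  have Hvi1 : forall z, inM z -> m z = (z == vi).
    by move=> z Hz; rewrite Hm0 //; case: eqP => // E; move: Hvi; rewrite -E Hz.
  case: (liftMT Hone Hvi1) => [z Hz|m1 R1 [E1 E2 E3 E4]].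
    by rewrite eqxx mul1n Hag.
  case: (IH m1) => [|m3 R3 B3]; last by exists m3 => //; apply: ureach_trans R1 R3.
  split => z Hz.
    have := E2 z Hz; have := G1 z; rewrite G2 Hag // /= eqxx (negbTE Hvio).
    by rewrite (eq_sym vo vi) (negbTE Hvio) /= !eqxx /=; lia.
  by rewrite E1 //; case: eqP => // E; move: Hvo; rewrite -E Hz.
- pose m2 := fun z => m z - upre UR t z + upost UR t z.
  have Htt : t <> t0 by apply/eqP.
  case: (IH m2) => [|m3 R3 B3].
    split => z Hz; rewrite /m2 HNpre // HNpost //.
      by rewrite G2 Hag.
    by case: (HNin Ht Hz) => /negbTE -> /negbTE ->; rewrite Hm0.
  exists m3 => //; apply: ur_step R3; exists t; first by apply/HT; left.
  split => // z; rewrite HNpre //; case Hz: (inM z).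
    by rewrite (negbTE (proj1 (HNin Ht Hz))).
  by rewrite Hag ?Hz.
Qed.

(* As for place_comp: simulate forward, complete the pending runs of UM by its
   sub-soundness, finish in UN, and replay backward. *)
Lemma trans_comp : usub UR IR OR.
Proof.
move=> k k' m' Hk H.
case: (FreachT H (FinitT k)) => n [j [l [HN Hag Hlj HM]]].
have HM1 : ureach UM (fun z => j * (z == vi)) (fun z => MpT m' z + l * (z == vo)).
  apply: ureach_ext HM _ _ => // z; rewrite /MpT HOR; case: (inM z) => //=; lia.
have HM2 := HsM Hlj HM1.
have Hmm : forall z, inM z -> m' z = MpT m' z by move=> z Hz; rewrite /MpT Hz.
case: (liftMT HM2 Hmm) => [z Hz|m1 R1 [E1 E2 E3 E4]].
  by rewrite /MpT (negbTE Hvi) mul0n.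
pose n' := fun z => n z - k' * ON z.
have Hn : forall z, k' * ON z <= n z.
  move=> z; case Hz: (inM z); first by rewrite (negbTE (proj2 (HINM Hz))) muln0.
  by rewrite Hag ?Hz // HOR Hz /=; lia.
have HN' : ureach UN (fun z => k * IN z) (fun z => n' z + k' * ON z).
  by apply: ureach_ext HN _ _ => // z; rewrite /n' subnK.
have HN2 := HsN Hk HN'.
have HB : BRelT m1 n'.
  split => z Hz.
    have := E2 z Hz; rewrite /n' Hag // HOR Hz /= /MpT (negbTE Hvi) (negbTE Hvo).
    by rewrite (negbTE Hvio) eqxx; lia.
  by rewrite E1 //; case: eqP => [E|]; [move: Hvo; rewrite -E Hz | rewrite muln0].
case: (bliftT HN2 HB) => m2 R2 [A1 A2].
apply: ureach_trans R1 (ureach_ext R2 (fun z => erefl) _) => z.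
rewrite HOR; case Hz: (inM z); first by rewrite A2 // muln0.
by rewrite A1 ?Hz.
Qed.

End TransComp.

Lemma ureach_inert (U : unet) (c : umark) m1 m3 : ureach U m1 m3 ->
  (forall t z, uT U t -> 0 < c z -> upre U t z = false) ->
  forall a, (forall z, m1 z = a z + c z) ->
  exists2 b, (forall z, m3 z = b z + c z) & ureach U a b.
Proof.
move=> H Hc; elim: H => [x y E|x y w [t Ht [G1 G2]] R IH] a Ha.
  by exists a; [move=> z; rewrite -E Ha | apply: ur_refl].
case: (IH (fun z => a z - upre U t z + upost U t z)) => [z|b Hb Rb].
  rewrite G2 Ha; have := G1 z; rewrite Ha.
  case Hcz: (0 < c z); first by rewrite (Hc _ _ Ht Hcz); lia.
  by move: Hcz; rewrite lt0n => /negbFE/eqP ->; lia.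
exists b => //; apply: ur_step Rb; exists t => //; split => // z.
have := G1 z; rewrite Ha.
case Hcz: (0 < c z); first by rewrite (Hc _ _ Ht Hcz).
by move: Hcz; rewrite lt0n => /negbFE/eqP ->; lia.
Qed.

(* If a single token can travel from the input i and from every
   position a transition produces into, to the output o, the net is
   sub-sound: tokens never interact. *)
Section SNet.
Variable U : unet.
Variables i o : X.
Definition good (z : X) := ureach U (fun x => (x == z) : nat) (fun x => (x == o) : nat).
Hypothesis HS : forall t, uT U t -> exists a, exists b,
  [/\ forall z, upre U t z = (z == a), forall z, upost U t z = (z == b) & good b].
Hypothesis Hi : good i.

Lemma sinv m0 m : ureach U m0 m -> forall s0, (forall z, m0 z = count_mem z s0) ->
  (forall x, x \in s0 -> good x) ->
  exists s, [/\ size s = size s0, (forall x, x \in s -> good x) & forall z, m z = count_mem z s].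
Proof.
move=> H; elim: H => [x y E|x y w [t Ht [G1 G2]] R IH] s0 Hs0 Hg.
  by exists s0; split => // z; rewrite -E.
case: (HS Ht) => a [b [Ea Eb Gb]].
have Has : a \in s0.
  by rewrite -has_pred1 has_count -Hs0; have := G1 a; rewrite Ea eqxx.
have Hp := perm_to_rem Has.
case: (IH (b :: rem a s0)) => [z|z|s [S1 S2 S3]].
- rewrite G2 Ea Eb Hs0 ((permP Hp) (pred1 z)) /= !(eq_sym z).
  by case: (a == z); case: (b == z) => /=; lia.
- rewrite inE => /orP [/eqP ->|/mem_rem]; [exact: Gb | exact: Hg].
exists s; split => //; rewrite S1 /= size_rem // prednK //.
by move: Has; case: (s0).
Qed.

Lemma remove_o n s : n <= count_mem o s -> exists s',
  [/\ forall z, count_mem z s = count_mem z s' + n * (z == o),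
      size s = size s' + n & {subset s' <= s}].
Proof.
elim: n => [|n IH] Hn.
  by exists s; split => // [z|]; rewrite ?mul0n ?addn0.
case: (IH (ltnW Hn)) => s' [E1 E2 E3].
have Ho : o \in s'.
  by rewrite -has_pred1 has_count; have := E1 o; rewrite eqxx muln1; lia.
exists (rem o s'); split.
- move=> z; rewrite E1 ((permP (perm_to_rem Ho)) (pred1 z)) /= (eq_sym o z).
  by case: (z == o) => /=; lia.
- by rewrite E2 size_rem // -addSnnS prednK //; move: Ho; case: (s').
- by move=> x /mem_rem /E3.
Qed.

Lemma allgood s : (forall x, x \in s -> good x) ->
  ureach U (fun z => count_mem z s) (fun z => size s * (z == o)).
Proof.
elim: s => [|x s IH] Hg /=; first by apply: ur_refl.
apply: ureach_ext (ureach_plus (Hg x (mem_head x s)) (IH _)) _ _ => [y|z|z].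
- by move=> Hy; apply: Hg; rewrite inE Hy orbT.
- by rewrite eq_sym.
- by rewrite mulSn.
Qed.

(* Write the reached marking as a multiset of good tokens, set aside the k'
   tokens already on o, and bring the others to o. *)
Lemma snet_sub : usub U (fun z => z == i) (fun z => z == o).
Proof.
move=> k k' m' Hk H.
case: (sinv H (s0 := nseq k i)) => [z|x|s [S1 S2 S3]].
- by rewrite count_nseq /= eq_sym mulnC.
- by rewrite mem_nseq => /andP [_ /eqP ->].
case: (@remove_o k' s) => [|s' [E1 E2 E3]].
  by rewrite -S3 eqxx muln1 leq_addl.
have Hm : forall z, m' z = count_mem z s'.
  by move=> z; have := S3 z; rewrite E1; lia.
apply: ureach_ext (allgood (fun x Hx => S2 x (E3 x Hx))) _ _ => // z.
by rewrite size_nseq in S1; congr (_ * _); lia.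
Qed.

End SNet.

(* A run from k.I is described by its firing vector x via the state
   equation (Inv); acyclicity bounds x by k, and any marking with x < k
   somewhere still enables a transition, so firing everything exactly k
   times always completes.  Tokens on O are inert, whence sub-soundness. *)
Section TNet.
Variable U : unet.
Variable ts : seq nat.
Variables I O : X -> bool.
Variable r : nat -> nat.
Hypothesis Hts : forall t, uT U t <-> t \in ts.
Hypothesis Huniq : uniq ts.
Hypothesis Hbal : forall z, I z + \sum_(t <- ts) upost U t z = O z + \sum_(t <- ts) upre U t z.
Hypothesis Hle1 : forall z, O z + \sum_(t <- ts) upre U t z <= 1.
Hypothesis Hrank : forall t t' z, t \in ts -> t' \in ts -> upost U t' z -> upre U t z -> r t' < r t.
Hypothesis Hpre : forall t, t \in ts -> exists z, upre U t z.

Definition Inv k (m : umark) (x : nat -> nat) := forall z,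
  m z + \sum_(t <- ts) upre U t z * x t = k * I z + \sum_(t <- ts) upost U t z * x t.

Lemma sum_delta (f : nat -> nat) t : t \in ts -> \sum_(t' <- ts) f t' * (t' == t) = f t.
Proof.
move=> Ht; rewrite (bigD1_seq t) //= eqxx muln1 big1 ?addn0 // => t' /negbTE ->.
by rewrite muln0.
Qed.

Lemma term_le (F : nat -> nat) t : t \in ts -> F t <= \sum_(t' <- ts) F t'.
Proof. by move=> Ht; rewrite (bigD1_seq t) //= leq_addr. Qed.

Lemma Inv_step k m x t : Inv k m x -> t \in ts -> (forall z, upre U t z <= m z) ->
  Inv k (fun z => m z - upre U t z + upost U t z) (fun t' => x t' + (t' == t)).
Proof.
move=> HI Ht Hen z.
under eq_bigr do rewrite mulnDr.
rewrite big_split /= sum_delta //.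
under [X in _ = _ + X]eq_bigr do rewrite mulnDr.
rewrite big_split /= sum_delta //.
have := HI z; have := Hen z; lia.
Qed.

Lemma reach_inv k m0 m x0 : ureach U m0 m -> Inv k m0 x0 -> exists x, Inv k m x.
Proof.
move=> H; elim: H x0 => [a b E|a b c [t Ht [G1 G2]] R IH] x0 HI.
  by exists x0 => z; rewrite -E.
apply: (IH (fun t' => x0 t' + (t' == t))).
have Ht' : t \in ts by apply/Hts.
by move=> z; rewrite G2; apply: Inv_step.
Qed.

(* No transition fires more than k times: by induction on the rank, each
   input position of t is fed by at most one transition, itself bounded. *)
Lemma inv_bound k m x : Inv k m x -> forall t, t \in ts -> x t <= k.
Proof.
move=> HI.
suff H : forall n t, r t < n -> t \in ts -> x t <= k by move=> t; apply: (H (r t).+1).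
elim=> [|n IH] t Hr Ht //.
case: (Hpre Ht) => z Hz.
have H1 : x t <= \sum_(t' <- ts) upre U t' z * x t'.
  by apply: leq_trans (term_le (fun t' => upre U t' z * x t') Ht); rewrite Hz mul1n.
have H2 : \sum_(t' <- ts) upost U t' z * x t' <= \sum_(t' <- ts) upost U t' z * k.
  rewrite big_seq [X in _ <= X]big_seq; apply: leq_sum => t' Ht'.
  case Hp: (upost U t' z); last by [].
  by rewrite !mul1n; apply: IH => //; apply: leq_trans (Hrank Ht Ht' Hp Hz) _.
have H3 : \sum_(t' <- ts) upost U t' z * k = k * \sum_(t' <- ts) upost U t' z.
  by rewrite [RHS]big_distrr /=; apply: eq_bigr => i _; rewrite mulnC.
have := HI z; have := Hbal z; have := Hle1 z; move: H1 H2 H3.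
set A := \sum_(t' <- ts) upre U t' z * x t'; set B := \sum_(t' <- ts) upost U t' z * x t'.
set C := \sum_(t' <- ts) upost U t' z * k; set D := \sum_(t' <- ts) (upost U t' z : nat).
set E := \sum_(t' <- ts) (upre U t' z : nat).
move=> H1 H2 H3 H4 H5 H6.
have : k * (I z + D) <= k * 1 by rewrite H5 leq_mul2l H4 orbT.
rewrite mulnDr muln1; lia.
Qed.

Lemma two_terms (F : nat -> nat) t t' : t \in ts -> t' \in ts -> t' != t ->
  F t + F t' <= \sum_(i <- ts) F i.
Proof.
move=> Ht Ht' Hne; rewrite (bigD1_seq t) //= big_mkcond /= leq_add2l.
by apply: leq_trans _ (term_le (fun i => if i != t then F i else 0) Ht'); rewrite Hne.
Qed.

Lemma sum_unique (f : nat -> nat) t z : t \in ts -> upre U t z ->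
  \sum_(t' <- ts) upre U t' z * f t' = f t.
Proof.
move=> Ht Hz; rewrite (bigD1_seq t) //= Hz mul1n big1_seq ?addn0 // => t' /andP [Hne Ht'].
case Hp: (upre U t' z); last by [].
have := two_terms (fun i => upre U i z) Ht Ht' Hne; rewrite Hz Hp /=.
by have := Hle1 z; lia.
Qed.

(* If t fired fewer than k times, some transition that fired fewer than k
   times is enabled: follow missing tokens backwards along the ranking. *)
Lemma find_en k m x : Inv k m x -> (forall t, t \in ts -> x t <= k) ->
  forall n t, r t < n -> t \in ts -> x t < k ->
  exists t', [/\ t' \in ts, x t' < k & forall z, upre U t' z <= m z].
Proof.
move=> HI Hb; elim=> [|n IH] t Hr Ht Hx //.
case: (classic (forall z, upre U t z <= m z)) => [Hen|Hnen]; first by exists t.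
case: (not_all_ex_not _ _ Hnen) => z Hz.
have Hpz : upre U t z by move: Hz; case: (upre U t z).
have Hm0 : m z = 0 by move: Hz; rewrite Hpz; lia.
case Hh: (has (fun t' => upost U t' z && (x t' < k)) ts).
  case/hasP: Hh => t' Ht' /andP [Hp Hx'].
  by apply: (IH t') => //; apply: leq_trans (Hrank Ht Ht' Hp Hpz) _.
exfalso; move/negbT/hasPn: Hh => Hh.
have H2 : \sum_(t' <- ts) upost U t' z * k <= \sum_(t' <- ts) upost U t' z * x t'.
  rewrite big_seq [X in _ <= X]big_seq; apply: leq_sum => t' Ht'.
  have := Hh t' Ht'; case: (upost U t' z) => //= /negbTE; rewrite ltnNge => /negbFE.
  by rewrite !mul1n.
have H3 : \sum_(t' <- ts) upost U t' z * k = k * \sum_(t' <- ts) upost U t' z.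
  by rewrite [RHS]big_distrr /=; apply: eq_bigr => i _; rewrite mulnC.
have H4 := term_le (fun t' => (upre U t' z : nat)) Ht.
have := HI z; rewrite Hm0 (sum_unique _ Ht Hpz) add0n.
have := Hbal z; have := Hle1 z; move: H2 H3 H4; rewrite Hpz.
set C := \sum_(t' <- ts) upost U t' z * k; set D := \sum_(t' <- ts) (upost U t' z : nat).
set E := \sum_(t' <- ts) (upre U t' z : nat).
set B := \sum_(t' <- ts) upost U t' z * x t'.
move=> H2 H3 H4 H5 H6 H7.
have : k * (I z + D) = k.
  rewrite H6; have -> : O z + E = 1 by lia.
  by rewrite muln1.
rewrite mulnDr; lia.
Qed.

Lemma all_done k m x : Inv k m x -> all (fun t => x t == k) ts -> forall z, m z = k * O z.
Proof.
move=> HI /allP Hall z.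
have Ex : forall F : nat -> nat, \sum_(t <- ts) F t * x t = k * \sum_(t <- ts) F t.
  move=> F; rewrite [RHS]big_distrr /=; apply: eq_big_seq => t Ht.
  by rewrite (eqP (Hall t Ht)) mulnC.
have := HI z; rewrite !Ex.
have : k * (I z + \sum_(t <- ts) upost U t z) = k * (O z + \sum_(t <- ts) upre U t z).
  by rewrite Hbal.
rewrite !mulnDr; lia.
Qed.

Lemma complete k : forall n m x, \sum_(t <- ts) (k - x t) <= n -> Inv k m x ->
  (forall t, t \in ts -> x t <= k) -> ureach U m (fun z => k * O z).
Proof.
elim=> [|n IH] m x Hn HI Hb.
  case Hall: (all (fun t => x t == k) ts); first by apply: ur_refl; apply: all_done Hall.
  exfalso; case/allPn: Hall => t Ht Hne.
  have := term_le (fun t => k - x t) Ht; have := Hb t Ht; move: Hne Hn => /eqP; lia.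
case Hall: (all (fun t => x t == k) ts); first by apply: ur_refl; apply: all_done Hall.
case/allPn: Hall => t Ht Hne.
have Hxt : x t < k by have := Hb t Ht; move: Hne => /eqP; lia.
case: (find_en HI Hb (ltnSn (r t)) Ht Hxt) => t' [Ht' Hx' Hen].
have HUt' : uT U t' by apply/Hts.
apply: ur_step (IH _ (fun i => x i + (i == t')) _ (Inv_step HI Ht' Hen) _).
- by exists t'.
- have E : \sum_(i <- ts) (k - (x i + (i == t'))) + 1 = \sum_(i <- ts) (k - x i).
    rewrite (bigD1_seq t') //= [in RHS](bigD1_seq t') //= eqxx.
    rewrite (eq_bigr (fun i => k - x i)) => [|i /negbTE ->]; last by rewrite addn0.
    lia.
  by move: Hn; rewrite -E; lia.
- move=> i Hi; have [->|Hne'] := eqVneq i t'; first by rewrite /= addn1.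
  by rewrite addn0; apply: Hb.
Qed.

(* Complete the run, ignoring the k' inert tokens already on O. *)
Lemma tnet_sub : usub U I O.
Proof.
move=> k k' m' Hk H.
have HI0 : Inv k (fun z => k * I z) (fun _ => 0).
  by move=> z; rewrite !big1 // => t _; rewrite muln0.
case: (reach_inv H HI0) => x HI.
have Hc := complete (leqnn _) HI (inv_bound HI).
case: (ureach_inert Hc (c := fun z => k' * O z) _ (a := m') (fun z => erefl)) => [t z Ht Hz|b Hb Rb].
  have HO : O z by move: Hz; case: (O z) => //; rewrite muln0.
  have Ht' : t \in ts by apply/Hts.
  have := Hle1 z; have := term_le (fun t => (upre U t z : nat)) Ht'; rewrite HO.
  by case: (upre U t z) => //=; lia.
apply: ureach_ext Rb _ _ => // z; have := Hb z.
by case: (O z); rewrite /= ?muln0 ?muln1; lia.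
Qed.

End TNet.

(* The u-net of a concrete net N with flag b.  With b = true (tWF nets) the
   input transitions consume from inr false and the output transitions
   produce into inr true, as in the place-completion. *)
Definition upreN (N : net) (b : bool) (t : nat) (z : X) : bool :=
  match z with inl x => (x, t) \in fl N | inr c => b && ~~ c && (t \in inp N) end.
Definition upostN (N : net) (b : bool) (t : nat) (z : X) : bool :=
  match z with inl y => (t, y) \in fl N | inr c => b && c && (t \in outp N) end.
Definition un (N : net) (b : bool) : unet :=
  UNet (fun t => t \in tr N) (upreN N b) (upostN N b).
Definition uIN (N : net) (b : bool) (z : X) : bool :=
  match z with inl x => ~~ b && (x \in inp N) | inr c => b && ~~ c end.
Definition uON (N : net) (b : bool) (z : X) : bool :=
  match z with inl x => ~~ b && (x \in outp N) | inr c => b && c end.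
Definition flagok (b : bool) (N : net) : Prop :=
  {subset inp N <= if b then tr N else pl N} /\ {subset outp N <= if b then tr N else pl N}.

Lemma reach_ext N m1 m2 m1' m2' : reach N m1 m2 -> (forall p, m1 p = m1' p) ->
  (forall p, m2 p = m2' p) -> reach N m1' m2'.
Proof.
move=> H; elim: H m1' m2' => [a b E|a b c0 [t Ht [H1 H2]] R IH] m1' m2' E1 E2.
  by apply: reach_refl => z; rewrite -E1 -E2.
apply: reach_step (IH b m2' (fun z => erefl) E2).
by exists t => //; split => p; rewrite -E1 ?H2.
Qed.

Section ConvFalse.
Variable N : net.
Definition phiF (m : marking) : umark := fun z => match z with inl x => m x | inr _ => 0 end.

Lemma reach_phiF m1 m2 : reach N m1 m2 -> ureach (un N false) (phiF m1) (phiF m2).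
Proof.
move=> H; elim: H => [a b E|a b c0 [t Ht [H1 H2]] R IH].
  by apply: ur_refl => [[x|c]] //=.
apply: ur_step IH; exists t => //; split => [[x|c]|[x|c]] //=.
Qed.

Lemma ureach_psiF w1 w2 : ureach (un N false) w1 w2 ->
  reach N (fun x => w1 (inl x)) (fun x => w2 (inl x)).
Proof.
move=> H; elim: H => [a b E|a b c0 [t Ht [H1 H2]] R IH].
  by apply: reach_refl => x.
apply: reach_step IH; exists t => //; split => x; [exact: (H1 (inl x)) | exact: (H2 (inl x))].
Qed.

Lemma conv_false : usub (un N false) (uIN N false) (uON N false) -> subsound_p N.
Proof.
move=> Hs k k' m' Hk H.
have H1 := reach_phiF H.
have H2 : ureach (un N false) (fun z => k * uIN N false z) (fun z => phiF m' z + k' * uON N false z).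
  by apply: ureach_ext H1 _ _ => [[x|c]|[x|c]] //=; rewrite ?muln0.
have := ureach_psiF (Hs k k' _ Hk H2).
by move=> H3; apply: reach_ext H3 _ _.
Qed.
End ConvFalse.

Lemma foldr_max_ub (s : seq nat) x : x \in s -> x <= foldr maxn 0 s.
Proof.
elim: s => //= y s IH; rewrite inE => /orP [/eqP ->|/IH]; lia.
Qed.

Lemma mem_pairl (a x y : nat) (s : seq nat) :
  ((x, y) \in [seq (a, t) | t <- s]) = (x == a) && (y \in s).
Proof.
elim: s => [|h s IH] /=; first by rewrite andbF.
by rewrite !inE IH xpair_eqE -andb_orr.
Qed.
Lemma mem_pairr (a x y : nat) (s : seq nat) :
  ((x, y) \in [seq (t, a) | t <- s]) = (x \in s) && (y == a).
Proof.
elim: s => [|h s IH] /=; first by [].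
by rewrite !inE IH xpair_eqE -andb_orl.
Qed.

(* For flag true, runs of pc N and of the u-net of N coincide, the fresh places
   fi / fo of pc N corresponding to inr false / inr true. *)
Section ConvTrue.
Variable N : net.
Hypothesis Hpet : petri N.
Let fi := fresh N.
Let fo := (fresh N).+1.

Lemma node_lt x : x \in pl N \/ x \in tr N -> x < fi.
Proof.
move=> H; rewrite /fi /fresh ltnS; apply: foldr_max_ub; rewrite mem_cat.
by case: H => ->; rewrite ?orbT.
Qed.

Lemma edge_nodes x y : (x, y) \in fl N -> x < fi /\ y < fi.
Proof.
move=> /(proj2 Hpet) [[H1 H2]|[H1 H2]]; split; apply: node_lt; tauto.
Qed.

Lemma fifo : (fi == fo) = false.
Proof. by apply/negbTE; rewrite /fo /fi; lia. Qed.

Lemma edge_fi1 t : ((fi, t) \in fl N) = false.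
Proof. by apply/negbTE/negP => /edge_nodes [H _]; rewrite ltnn in H. Qed.
Lemma edge_fi2 t : ((t, fi) \in fl N) = false.
Proof. by apply/negbTE/negP => /edge_nodes [_ H]; rewrite ltnn in H. Qed.
Lemma edge_fo1 t : ((fo, t) \in fl N) = false.
Proof. by apply/negbTE/negP => /edge_nodes [H _]; rewrite /fo in H; lia. Qed.
Lemma edge_fo2 t : ((t, fo) \in fl N) = false.
Proof. by apply/negbTE/negP => /edge_nodes [_ H]; rewrite /fo in H; lia. Qed.

Lemma tr_fresh t : t \in tr N -> (t == fi) = false /\ (t == fo) = false.
Proof. by move=> Ht; have := node_lt (or_intror Ht); rewrite /fo; split; apply/negbTE; lia. Qed.

Lemma prepc t x : t \in tr N ->
  ((x, t) \in fl (pc N)) = ((x == fi) && (t \in inp N)) || ((x, t) \in fl N).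
Proof.
move=> Ht; rewrite /pc /= !mem_cat mem_pairl mem_pairr -/fi -/fo.
by rewrite (proj2 (tr_fresh Ht)) andbF.
Qed.
Lemma postpc t y : t \in tr N ->
  ((t, y) \in fl (pc N)) = ((t \in outp N) && (y == fo)) || ((t, y) \in fl N).
Proof.
move=> Ht; rewrite /pc /= !mem_cat mem_pairl mem_pairr -/fi -/fo.
by rewrite (proj1 (tr_fresh Ht)).
Qed.

Definition phiT (m : marking) : umark := fun z =>
  match z with inl x => if (x == fi) || (x == fo) then 0 else m x
             | inr c => if c then m fo else m fi end.
Definition psiT (w : umark) : marking := fun x =>
  if x == fi then w (inr false) else if x == fo then w (inr true) else w (inl x).

Lemma reach_phiT m1 m2 : reach (pc N) m1 m2 -> ureach (un N true) (phiT m1) (phiT m2).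
Proof.
move=> H; elim: H => [a b E|a b c0 [t Ht [H1 H2]] R IH].
  by apply: ur_refl => [[x|[]]] //=; rewrite !E.
apply: ur_step IH; exists t => //; split => [[x|[]]|[x|[]]] /=.
- case: ifP => [/orP [/eqP ->|/eqP ->]|/norP [Hx1 Hx2]]; rewrite ?edge_fi1 ?edge_fo1 //.
  by have := H1 x; rewrite prepc // (negbTE Hx1).
- by [].
- by have := H1 fi; rewrite prepc // eqxx edge_fi1 orbF.
- case: ifP => [/orP [/eqP ->|/eqP ->]|/norP [Hx1 Hx2]];
    rewrite ?edge_fi1 ?edge_fo1 ?edge_fi2 ?edge_fo2 //.
  by rewrite H2 prepc // postpc // (negbTE Hx1) (negbTE Hx2) andbF.
- by rewrite H2 prepc // postpc // (eq_sym fo fi) fifo edge_fo1 edge_fo2 eqxx /= andbT orbF.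
- by rewrite H2 prepc // postpc // eqxx edge_fi1 edge_fi2 fifo /= andbF orbF addn0.
Qed.

Lemma ureach_psiT w1 w2 : ureach (un N true) w1 w2 -> reach (pc N) (psiT w1) (psiT w2).
Proof.
move=> H; elim: H => [a b E|a b c0 [t Ht [H1 H2]] R IH].
  by apply: reach_refl => x; rewrite /psiT !E.
apply: reach_step IH; exists t => //; split => x; rewrite /psiT prepc // ?postpc //.
- case: (x =P fi) => [->|Hx1]; first by rewrite ?eqxx edge_fi1 orbF; exact: (H1 (inr false)).
  case: (x =P fo) => [->|Hx2]; first by rewrite edge_fo1 ?(eq_sym fo fi) ?fifo.
  exact: (H1 (inl x)).
- case: (x =P fi) => [->|Hx1].
    by rewrite ?eqxx edge_fi1 edge_fi2 ?fifo andbF orbF; exact: (H2 (inr false)).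
  case: (x =P fo) => [->|Hx2].
    rewrite edge_fo1 edge_fo2 ?(eq_sym fo fi) ?fifo ?eqxx andbT orbF.
    by rewrite /= orbF (H2 (inr true)).
  by rewrite /= andbF; exact: (H2 (inl x)).
Qed.

Lemma conv_true : usub (un N true) (uIN N true) (uON N true) -> subsound_p (pc N).
Proof.
move=> Hs k k' m' Hk H.
have H1 := reach_phiT H.
have H2 : ureach (un N true) (fun z => k * uIN N true z) (fun z => phiT m' z + k' * uON N true z).
  apply: ureach_ext H1 _ _ => [[x|[]]|[x|[]]] //=; rewrite /kset /= !inE -/fi -/fo.
  - by case: ifP => [_|/negbT/norP [/negbTE -> _]]; rewrite muln0.
  - by rewrite (eq_sym fo fi) fifo.
  - by rewrite eqxx.
  - by case: ifP => [_|/negbT/norP [_ /negbTE ->]]; rewrite muln0 addn0.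
  - by rewrite eqxx.
  - by rewrite fifo.
have := ureach_psiT (Hs k k' _ Hk H2) => H3.
apply: reach_ext H3 _ _ => x; rewrite /psiT /kset /= ?inE -/fi -/fo.
- by case: (x =P fi) => [->|_] //; case: (x =P fo) => [->|_].
- case: eqP => [->|_]; first by rewrite fifo.
  by case: eqP.
Qed.
End ConvTrue.

(* The property proved for every AND-OR net, stable under substitution: for
   the flag matching its interface, its u-net is sub-sound. *)
Definition Good (N : net) : Prop :=
  petri N /\ exists b, flagok b N /\ usub (un N b) (uIN N b) (uON N b).

Lemma inl_eqE (x y : nat) : (inl x == inl y :> X) = (x == y).
Proof. by []. Qed.
Lemma inr_inl_eqE c (y : nat) : (inr c == inl y :> X) = false.
Proof. by []. Qed.

Section NetFacts.
Variable N : net.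
Hypothesis HP : petri N.

Lemma pt_disj x : x \in pl N -> x \in tr N -> False.
Proof. exact: (proj1 HP). Qed.

Lemma edge_node x y : (x, y) \in fl N -> node N x /\ node N y.
Proof. by rewrite /node => /(proj2 HP) [[-> ->]|[-> ->]]; rewrite ?orbT. Qed.

Lemma edge_pt x t : (x, t) \in fl N -> t \in tr N -> x \in pl N.
Proof. by move=> /(proj2 HP) [[-> _]|[_ H]] // /(pt_disj H). Qed.
Lemma edge_tp t y : (t, y) \in fl N -> t \in tr N -> y \in pl N.
Proof. by move=> /(proj2 HP) [[H _]|[_ ->]] // /(pt_disj H). Qed.
Lemma edge_to_place x p : (x, p) \in fl N -> p \in pl N -> x \in tr N.
Proof. by move=> /(proj2 HP) [[_ H] /pt_disj|[-> _]] //; move/(_ H). Qed.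
Lemma edge_from_place p y : (p, y) \in fl N -> p \in pl N -> y \in tr N.
Proof. by move=> /(proj2 HP) [[_ ->]|[H _] /pt_disj] //; move/(_ H). Qed.
Lemma tr_neq_pl t p : t \in tr N -> p \in pl N -> t != p.
Proof. by move=> Ht Hp; apply/eqP => E; subst; apply: (pt_disj Hp Ht). Qed.

Lemma flag_inp_node b x : flagok b N -> x \in inp N -> node N x.
Proof. by case=> H _ /H; rewrite /node; case: (b) => ->; rewrite ?orbT. Qed.
Lemma flag_outp_node b x : flagok b N -> x \in outp N -> node N x.
Proof. by case=> _ H /H; rewrite /node; case: (b) => ->; rewrite ?orbT. Qed.
End NetFacts.

Lemma disj_pl (N M : net) x : disjoint_nets N M -> x \in pl M -> node N x -> False.
Proof. by move=> Hd Hx HN; apply: (Hd x HN); rewrite /node Hx. Qed.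
Lemma disj_tr (N M : net) x : disjoint_nets N M -> x \in tr M -> node N x -> False.
Proof. by move=> Hd Hx HN; apply: (Hd x HN); rewrite /node Hx orbT. Qed.
Lemma pl_node (N : net) x : x \in pl N -> node N x.
Proof. by rewrite /node => ->. Qed.
Lemma tr_node (N : net) x : x \in tr N -> node N x.
Proof. by rewrite /node => ->; rewrite orbT. Qed.

Lemma fpath_first (N : net) (x z : nat) : Defs.fpath N x z -> x <> z -> exists y, (x, y) \in fl N.
Proof. by case=> [//|a y b H _ _]; exists y. Qed.

Lemma fpath_last (N : net) (x z : nat) : Defs.fpath N x z -> x <> z -> exists y, (y, z) \in fl N.
Proof.
elim=> [//|a y b H P IH] Hne.
have [E|Hne'] := eqVneq y b; first by subst; exists a.
by apply: IH; apply/eqP.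
Qed.

Lemma fpath_trans (N : net) (x y z : nat) : Defs.fpath N x y -> Defs.fpath N y z -> Defs.fpath N x z.
Proof. by elim=> [//|a b c H _ IH] /IH; apply: fpath_step. Qed.

(* In a WF net every transition produces a token (it lies on a path to O). *)
Lemma wf_post N b : wf_common N -> flagok b N -> forall t, t \in tr N -> exists z, upostN N b t z.
Proof.
move=> [HP [_ [_ [_ Hout]]]] Hf t Ht.
case: (Hout t) => [|o Ho Hp]; first by rewrite /node Ht orbT.
have [E|Hne] := eqVneq t o.
  subst; case: b Hf => [_|[_ Hf]]; first by exists (inr true); rewrite /= Ho.
  by have := pt_disj HP (Hf _ Ho) Ht.
by case: (fpath_first Hp (elimN eqP Hne)) => y Hy; exists (inl y).
Qed.

Lemma pWF_flag N b : pWF N -> flagok b N -> b = false.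
Proof.
move=> [[HP [[i Hi] _]] [HI _]] [Hf _]; case: b Hf => // Hf.
by have := pt_disj HP (HI _ Hi) (Hf _ Hi).
Qed.
Lemma tWF_flag N b : tWF N -> flagok b N -> b = true.
Proof.
move=> [[HP [[i Hi] _]] [HI _]] [Hf _]; case: b Hf => // Hf.
by have := pt_disj HP (Hf _ Hi) (HI _ Hi).
Qed.
Lemma pWF_flagok N : pWF N -> flagok false N.
Proof. by case=> _ [H1 H2]; split. Qed.
Lemma tWF_flagok N : tWF N -> flagok true N.
Proof. by case=> _ [H1 H2]; split. Qed.


Definition inM_of (M : net) (z : X) : bool :=
  match z with inl x => x \in pl M | inr _ => false end.

Section PlaceSubst.
Variables (N M R : net) (p : nat) (bN : bool).
Hypothesis HPN : petri N.
Hypothesis HfN : flagok bN N.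
Hypothesis HPM : petri M.
Hypothesis HwM : pWF M.
Hypothesis Hdis : disjoint_nets N M.
Hypothesis Hp : p \in pl N.
Hypothesis Hpl : forall x, x \in pl R <-> (x \in pl N /\ x != p) \/ x \in pl M.
Hypothesis Htr : forall x, x \in tr R <-> x \in tr N \/ x \in tr M.
Hypothesis Hfl : forall x y, (x, y) \in fl R <->
  ((x, y) \in fl N /\ x != p /\ y != p) \/ (x, y) \in fl M \/
  ((x, p) \in fl N /\ y \in inp M) \/ (x \in outp M /\ (p, y) \in fl N).
Hypothesis Hinp : forall x, x \in inp R <->
  if p \in inp N then (x \in inp N /\ x != p) \/ x \in inp M else x \in inp N.
Hypothesis Hout : forall x, x \in outp R <->
  if p \in outp N then (x \in outp N /\ x != p) \/ x \in outp M else x \in outp N.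

Lemma inpM_pl : {subset inp M <= pl M}. Proof. exact: proj1 (proj2 HwM). Qed.
Lemma outpM_pl : {subset outp M <= pl M}. Proof. exact: proj2 (proj2 HwM). Qed.

(* For a tWF net N the place p is not an interface node, so R has the same
   interface as N. *)
Lemma inpR_flag : bN -> forall x, (x \in inp R) = (x \in inp N).
Proof.
move=> Hb x; have HpI : p \notin inp N.
  by apply/negP => H; have := proj1 HfN p H; rewrite Hb => /(pt_disj HPN Hp).
by have := @Hinp x; rewrite (negbTE HpI) => E; apply/idP/idP => /E.
Qed.
Lemma outpR_flag : bN -> forall x, (x \in outp R) = (x \in outp N).
Proof.
move=> Hb x; have HpO : p \notin outp N.
  by apply/negP => H; have := proj2 HfN p H; rewrite Hb => /(pt_disj HPN Hp).
by have := @Hout x; rewrite (negbTE HpO) => E; apply/idP/idP => /E.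
Qed.

Lemma place_subst_iface (IN IM IR : seq nat) :
  {subset IN <= if bN then tr N else pl N} -> {subset IM <= pl M} ->
  (forall x, x \in IR <-> if p \in IN then (x \in IN /\ x != p) \/ x \in IM else x \in IN) ->
  {subset IR <= if bN then tr R else pl R}.
Proof.
move=> HfI HIM HIR x /HIR; case HpI: (p \in IN).
  case: bN HfI => HfI; first by have := pt_disj HPN Hp (HfI p HpI).
  by case=> [[H1 H2]|H]; apply/Hpl; [left; split => //; exact: HfI | right; exact: HIM].
move=> H; have := HfI x H; case: bN HfI => _ Hx; first by apply/Htr; left.
by apply/Hpl; left; split => //; apply/eqP => E; subst; rewrite H in HpI.
Qed.

Lemma place_subst_flagok : flagok bN R.
Proof.
split; first exact: place_subst_iface (proj1 HfN) inpM_pl Hinp.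
exact: place_subst_iface (proj2 HfN) outpM_pl Hout.
Qed.

Lemma place_subst_petri : petri R.
Proof.
split.
- move=> x /Hpl [[H1 _]|H1] /Htr [H2|H2].
  + exact: (pt_disj HPN H1 H2).
  + by apply: (disj_tr Hdis H2); rewrite /node H1.
  + exact: (disj_pl Hdis H1 (tr_node H2)).
  + exact: (pt_disj HPM H1 H2).
- move=> x y /Hfl [[H [Hx Hy]]|[H|[[H1 H2]|[H1 H2]]]].
  + case: (proj2 HPN _ _ H) => [[A B]|[A B]].
      by left; split; [apply/Hpl; left | apply/Htr; left].
    by right; split; [apply/Htr; left | apply/Hpl; left].
  + case: (proj2 HPM _ _ H) => [[A B]|[A B]].
      by left; split; [apply/Hpl; right | apply/Htr; right].
    by right; split; [apply/Htr; right | apply/Hpl; right].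
  + right; split; first by apply/Htr; left; apply: (edge_to_place HPN H1 Hp).
    by apply/Hpl; right; apply: inpM_pl.
  + left; split; first by apply/Hpl; right; apply: outpM_pl.
    by apply/Htr; left; apply: (edge_from_place HPN H2 Hp).
Qed.

Lemma place_subst_preM t : uT (un M false) t -> forall z,
  upre (un R bN) t z = upre (un M false) t z.
Proof.
move=> Ht [x|c] /=.
- apply/idP/idP => [/Hfl [[H _]|[H|[[_ H]|[_ H]]]] //|H]; last by apply/Hfl; right; left.
  + by case: (disj_tr Hdis Ht (edge_node HPN H).2).
  + by case: (pt_disj HPM (inpM_pl H) Ht).
  + by case: (disj_tr Hdis Ht (edge_node HPN H).2).
- apply/negbTE/negP => /andP [/andP [Hb _] HtI]; rewrite (inpR_flag Hb) in HtI.
  exact: (disj_tr Hdis Ht (flag_inp_node HfN HtI)).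
Qed.

Lemma place_subst_postM t : uT (un M false) t -> forall z,
  upost (un R bN) t z = upost (un M false) t z.
Proof.
move=> Ht [y|c] /=.
- apply/idP/idP => [/Hfl [[H _]|[H|[[H _]|[H _]]]] //|H]; last by apply/Hfl; right; left.
  + by case: (disj_tr Hdis Ht (edge_node HPN H).1).
  + by case: (disj_tr Hdis Ht (edge_node HPN H).1).
  + by case: (pt_disj HPM (outpM_pl H) Ht).
- apply/negbTE/negP => /andP [/andP [Hb _] HtI]; rewrite (outpR_flag Hb) in HtI.
  exact: (disj_tr Hdis Ht (flag_outp_node HfN HtI)).
Qed.

Lemma place_subst_preN t : uT (un N bN) t -> forall z,
  upre (un R bN) t z = if inM_of M z then upre (un N bN) t (inl p) && uON M false z
                       else (z != inl p) && upre (un N bN) t z.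
Proof.
move=> Ht [x|c] /=.
- case Hx: (x \in pl M).
  + apply/idP/idP => [/Hfl [[H _]|[H|[[_ H]|[H1 H2]]]]|/andP [H1 H2]].
    * by case: (disj_pl Hdis Hx (edge_node HPN H).1).
    * by case: (@Hdis t (tr_node Ht) (edge_node HPM H).2).
    * by case: (@Hdis t (tr_node Ht)); rewrite /node (inpM_pl H).
    * by rewrite H2 H1.
    * by apply/Hfl; right; right; right.
  + rewrite inl_eqE; apply/idP/idP => [/Hfl [[H [Hxp _]]|[H|[[_ H]|[H _]]]]|/andP [Hxp H]].
    * by rewrite Hxp H.
    * by case: (@Hdis t (tr_node Ht) (edge_node HPM H).2).
    * by case: (@Hdis t (tr_node Ht)); rewrite /node (inpM_pl H).
    * by rewrite (outpM_pl H) in Hx.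
    * by apply/Hfl; left; split => //; split => //; exact: (tr_neq_pl HPN Ht Hp).
- rewrite ?inr_inl_eqE /=; case Hb: bN => //=; by rewrite (inpR_flag Hb).
Qed.

Lemma place_subst_postN t : uT (un N bN) t -> forall z,
  upost (un R bN) t z = if inM_of M z then upost (un N bN) t (inl p) && uIN M false z
                        else (z != inl p) && upost (un N bN) t z.
Proof.
move=> Ht [y|c] /=.
- case Hy: (y \in pl M).
  + apply/idP/idP => [/Hfl [[H _]|[H|[[H1 H2]|[H _]]]]|/andP [H1 H2]].
    * by case: (disj_pl Hdis Hy (edge_node HPN H).2).
    * by case: (@Hdis t (tr_node Ht) (edge_node HPM H).1).
    * by rewrite H1 H2.
    * by case: (@Hdis t (tr_node Ht)); rewrite /node (outpM_pl H).
    * by apply/Hfl; right; right; left.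
  + rewrite inl_eqE; apply/idP/idP => [/Hfl [[H [_ Hyp]]|[H|[[_ H]|[H _]]]]|/andP [Hyp H]].
    * by rewrite Hyp H.
    * by case: (@Hdis t (tr_node Ht) (edge_node HPM H).1).
    * by rewrite (inpM_pl H) in Hy.
    * by case: (@Hdis t (tr_node Ht)); rewrite /node (outpM_pl H).
    * by apply/Hfl; left; split => //; split => //; exact: (tr_neq_pl HPN Ht Hp).
- rewrite ?inr_inl_eqE /=; case Hb: bN => //=; by rewrite (outpR_flag Hb).
Qed.

Lemma place_subst_inp z : uIN R bN z =
  if inM_of M z then uIN N bN (inl p) && uIN M false z else (z != inl p) && uIN N bN z.
Proof.
case: z => [x|c] /=; last by rewrite ?inr_inl_eqE.
case Hx: (x \in pl M) => /=.
- case Hb: bN => //=; have := @Hinp x; case HpI': (p \in inp N) => E /=.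
  + apply/idP/idP => [/E [[H _]|H] //|H]; last by apply/E; right.
    by have := (proj1 HfN) x H; rewrite Hb => H'; case: (disj_pl Hdis Hx); rewrite /node H'.
  + apply/negbTE/negP => /E H.
    by have := (proj1 HfN) x H; rewrite Hb => H'; case: (disj_pl Hdis Hx); rewrite /node H'.
- rewrite inl_eqE; case Hb: bN; first by rewrite /= andbF.
  have := @Hinp x; case HpI': (p \in inp N) => E /=.
  + apply/idP/idP => [/E [[H1 H2]|H]|/andP [H1 H2]]; first by rewrite H1 H2.
      by rewrite (inpM_pl H) in Hx.
    by apply/E; left.
  + apply/idP/idP => [/E H|/andP [_ H]]; last by apply/E.
    by rewrite H andbT; apply/eqP => E'; subst; rewrite H in HpI'.
Qed.

Lemma place_subst_outp z : uON R bN z =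
  if inM_of M z then uON N bN (inl p) && uON M false z else (z != inl p) && uON N bN z.
Proof.
case: z => [x|c] /=; last by rewrite ?inr_inl_eqE.
case Hx: (x \in pl M) => /=.
- case Hb: bN => //=; have := @Hout x; case HpO': (p \in outp N) => E /=.
  + apply/idP/idP => [/E [[H _]|H] //|H]; last by apply/E; right.
    by have := (proj2 HfN) x H; rewrite Hb => H'; case: (disj_pl Hdis Hx); rewrite /node H'.
  + apply/negbTE/negP => /E H.
    by have := (proj2 HfN) x H; rewrite Hb => H'; case: (disj_pl Hdis Hx); rewrite /node H'.
- rewrite inl_eqE; case Hb: bN; first by rewrite /= andbF.
  have := @Hout x; case HpO': (p \in outp N) => E /=.
  + apply/idP/idP => [/E [[H1 H2]|H]|/andP [H1 H2]]; first by rewrite H1 H2.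
      by rewrite (outpM_pl H) in Hx.
    by apply/E; left.
  + apply/idP/idP => [/E H|/andP [_ H]]; last by apply/E.
    by rewrite H andbT; apply/eqP => E'; subst; rewrite H in HpO'.
Qed.

Lemma place_subst_sub : usub (un N bN) (uIN N bN) (uON N bN) ->
  usub (un M false) (uIN M false) (uON M false) -> usub (un R bN) (uIN R bN) (uON R bN).
Proof.
move=> HsN HsM.
apply: (@place_comp (un R bN) (un N bN) (un M false) (uIN R bN) (uON R bN)
   (uIN N bN) (uON N bN) (uIN M false) (uON M false) (inl p) (inM_of M)).
- by move=> t; exact: (@Htr t).
- exact: place_subst_preM.
- exact: place_subst_postM.
- move=> t Ht [x|c] /=; split => // H.
  + exact: (edge_pt HPM H Ht).
  + exact: (edge_tp HPM H Ht).
- exact: place_subst_preN.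
- exact: place_subst_postN.
- move=> t Ht [x|c] //= Hx; split; apply/negP => H.
  + exact: (disj_pl Hdis Hx (edge_node HPN H).1).
  + exact: (disj_pl Hdis Hx (edge_node HPN H).2).
- by apply/negP => H; apply: (disj_pl Hdis H (pl_node Hp)).
- by move=> [x|c] //= /inpM_pl.
- by move=> [x|c] //= /outpM_pl.
- exact: place_subst_inp.
- exact: place_subst_outp.
- move=> [x|c] //= Hx; split; apply/negP => /andP [_ H].
  + exact: (disj_pl Hdis Hx (flag_inp_node HfN H)).
  + exact: (disj_pl Hdis Hx (flag_outp_node HfN H)).
- exact: HsN.
- exact: HsM.
- exact: (wf_post (proj1 HwM) (pWF_flagok HwM)).
- by case: HwM => [[_ [_ [[o Ho] _]]] _]; exists (inl o); rewrite /= Ho.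
Qed.

End PlaceSubst.

Lemma place_glue N M p R : Good N -> Good M -> disjoint_nets N M -> p \in pl N ->
  pWF M -> is_subst_place N M p R -> Good R.
Proof.
move=> [HPN [bN [HfN HsN]]] [HPM [bM [HfM HsM]]] Hdis Hp HwM [Hpl [Htr [Hfl [Hinp Hout]]]].
have EbM := pWF_flag HwM HfM; subst bM.
split; first exact: (place_subst_petri HPN HPM HwM Hdis Hp Hpl Htr Hfl).
exists bN; split; first exact: (place_subst_flagok HPN HfN HwM Hp Hpl Htr Hinp Hout).
exact: (place_subst_sub HPN HfN HPM HwM Hdis Hp Htr Hfl Hinp Hout HsN HsM).
Qed.


(* Transition substitution R = N (x)_t0 M, with N of flag bN and M a tWF
   net; the interface of M is that of its place-completion, inr false /
   inr true. *)
Section TransSubst.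
Variables (N M R : net) (t0 : nat) (bN : bool).
Hypothesis HPN : petri N.
Hypothesis HfN : flagok bN N.
Hypothesis HPM : petri M.
Hypothesis HwM : tWF M.
Hypothesis Hdis : disjoint_nets N M.
Hypothesis Ht0 : t0 \in tr N.
Hypothesis Hpl : forall x, x \in pl R <-> x \in pl N \/ x \in pl M.
Hypothesis Htr : forall x, x \in tr R <-> (x \in tr N /\ x != t0) \/ x \in tr M.
Hypothesis Hfl : forall x y, (x, y) \in fl R <->
  ((x, y) \in fl N /\ x != t0 /\ y != t0) \/ (x, y) \in fl M \/
  ((x, t0) \in fl N /\ y \in inp M) \/ (x \in outp M /\ (t0, y) \in fl N).
Hypothesis Hinp : forall x, x \in inp R <->
  if t0 \in inp N then (x \in inp N /\ x != t0) \/ x \in inp M else x \in inp N.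
Hypothesis Hout : forall x, x \in outp R <->
  if t0 \in outp N then (x \in outp N /\ x != t0) \/ x \in outp M else x \in outp N.

Lemma inpM_tr : {subset inp M <= tr M}. Proof. exact: proj1 (proj2 HwM). Qed.
Lemma outpM_tr : {subset outp M <= tr M}. Proof. exact: proj2 (proj2 HwM). Qed.

Lemma t0_inp_flag : t0 \in inp N -> bN.
Proof.
by move=> H; have := (proj1 HfN) t0 H; case: (bN) => // H'; case: (pt_disj HPN H' Ht0).
Qed.
Lemma t0_outp_flag : t0 \in outp N -> bN.
Proof.
by move=> H; have := (proj2 HfN) t0 H; case: (bN) => // H'; case: (pt_disj HPN H' Ht0).
Qed.

Lemma t0_no_post t : t \in tr N -> (t0, t) \in fl N -> False.
Proof. by move=> Ht H; apply: (pt_disj HPN (edge_pt HPN H Ht) Ht0). Qed.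
Lemma t0_no_pre t : t \in tr N -> (t, t0) \in fl N -> False.
Proof. by move=> Ht H; apply: (pt_disj HPN (edge_tp HPN H Ht) Ht0). Qed.

Lemma trans_subst_iface (IN IM IR : seq nat) :
  {subset IN <= if bN then tr N else pl N} -> {subset IM <= tr M} ->
  (forall x, x \in IR <-> if t0 \in IN then (x \in IN /\ x != t0) \/ x \in IM else x \in IN) ->
  {subset IR <= if bN then tr R else pl R}.
Proof.
move=> HfI HIM HIR x /HIR; case HI: (t0 \in IN).
  have Hb : bN by case: bN HfI => // HfI; have := pt_disj HPN (HfI t0 HI) Ht0.
  rewrite Hb; case=> [[H1 H2]|H]; apply/Htr; [left; split => // | by right; apply: HIM].
  by have := HfI x H1; rewrite Hb.
move=> H; have := HfI x H; case: bN HfI => _ Hx; last by apply/Hpl; left.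
by apply/Htr; left; split => //; apply/eqP => E; subst; rewrite H in HI.
Qed.

Lemma trans_subst_flagok : flagok bN R.
Proof.
split; first exact: trans_subst_iface (proj1 HfN) inpM_tr Hinp.
exact: trans_subst_iface (proj2 HfN) outpM_tr Hout.
Qed.

Lemma trans_subst_petri : petri R.
Proof.
split.
- move=> x /Hpl [H1|H1] /Htr [[H2 _]|H2].
  + exact: (pt_disj HPN H1 H2).
  + exact: (disj_tr Hdis H2 (pl_node H1)).
  + exact: (disj_pl Hdis H1 (tr_node H2)).
  + exact: (pt_disj HPM H1 H2).
- move=> x y /Hfl [[H [Hx Hy]]|[H|[[H1 H2]|[H1 H2]]]].
  + case: (proj2 HPN _ _ H) => [[A B]|[A B]].
      by left; split; [apply/Hpl; left | apply/Htr; left].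
    by right; split; [apply/Htr; left | apply/Hpl; left].
  + case: (proj2 HPM _ _ H) => [[A B]|[A B]].
      by left; split; [apply/Hpl; right | apply/Htr; right].
    by right; split; [apply/Htr; right | apply/Hpl; right].
  + left; split; first by apply/Hpl; left; apply: (edge_pt HPN H1 Ht0).
    by apply/Htr; right; apply: inpM_tr.
  + right; split; first by apply/Htr; right; apply: outpM_tr.
    by apply/Hpl; left; apply: (edge_tp HPN H2 Ht0).
Qed.

Lemma trans_subst_preM t : uT (un M true) t -> forall z,
  upre (un R bN) t z = if inM_of M z then upre (un M true) t z
                       else upre (un M true) t (inr false) && upre (un N bN) t0 z.
Proof.
move=> Ht [x|c] /=.
- case Hx: (x \in pl M).
  + apply/idP/idP => [/Hfl [[H _]|[H|[[H _]|[_ H]]]] //|H]; last by apply/Hfl; right; left.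
    * by case: (disj_tr Hdis Ht (edge_node HPN H).2).
    * by case: (disj_pl Hdis Hx (edge_node HPN H).1).
    * by case: (disj_tr Hdis Ht (edge_node HPN H).2).
  + apply/idP/idP => [/Hfl [[H _]|[H|[[H1 H2]|[_ H]]]]|/andP [H1 H2]].
    * by case: (disj_tr Hdis Ht (edge_node HPN H).2).
    * by rewrite (edge_pt HPM H Ht) in Hx.
    * by rewrite H1 H2.
    * by case: (disj_tr Hdis Ht (edge_node HPN H).2).
    * by apply/Hfl; right; right; left.
- have E : (t \in inp R) = (t0 \in inp N) && (t \in inp M).
    have := @Hinp t; case: (t0 \in inp N) => /= E.
    + apply/idP/idP; last by move=> H; apply/E; right.
      by move/E => [[H _]|H] //; case: (disj_tr Hdis Ht (flag_inp_node HfN H)).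
    + by apply/negbTE/negP => /E H; case: (disj_tr Hdis Ht (flag_inp_node HfN H)).
  rewrite E; by case: (bN); case: (c); case: (t0 \in inp N); case: (t \in inp M).
Qed.

Lemma trans_subst_postM t : uT (un M true) t -> forall z,
  upost (un R bN) t z = if inM_of M z then upost (un M true) t z
                        else upost (un M true) t (inr true) && upost (un N bN) t0 z.
Proof.
move=> Ht [y|c] /=.
- case Hy: (y \in pl M).
  + apply/idP/idP => [/Hfl [[H _]|[H|[[H _]|[_ H]]]] //|H]; last by apply/Hfl; right; left.
    * by case: (disj_tr Hdis Ht (edge_node HPN H).1).
    * by case: (disj_tr Hdis Ht (edge_node HPN H).1).
    * by case: (disj_pl Hdis Hy (edge_node HPN H).2).
  + apply/idP/idP => [/Hfl [[H _]|[H|[[H _]|[H1 H2]]]]|/andP [H1 H2]].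
    * by case: (disj_tr Hdis Ht (edge_node HPN H).1).
    * by rewrite (edge_tp HPM H Ht) in Hy.
    * by case: (disj_tr Hdis Ht (edge_node HPN H).1).
    * by rewrite H1 H2.
    * by apply/Hfl; right; right; right.
- have E : (t \in outp R) = (t0 \in outp N) && (t \in outp M).
    have := @Hout t; case: (t0 \in outp N) => /= E.
    + apply/idP/idP; last by move=> H; apply/E; right.
      by move/E => [[H _]|H] //; case: (disj_tr Hdis Ht (flag_outp_node HfN H)).
    + by apply/negbTE/negP => /E H; case: (disj_tr Hdis Ht (flag_outp_node HfN H)).
  rewrite E; by case: (bN); case: (c); case: (t0 \in outp N); case: (t \in outp M).
Qed.

Lemma trans_subst_preN t : uT (un N bN) t -> t <> t0 -> forall z,
  upre (un R bN) t z = upre (un N bN) t z.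
Proof.
move=> Ht Htt [x|c] /=.
- apply/idP/idP => [/Hfl [[H _]|[H|[[_ H]|[_ H]]]] //|H].
  + by case: (@Hdis t (tr_node Ht) (edge_node HPM H).2).
  + by case: (disj_tr Hdis (inpM_tr H) (tr_node Ht)).
  + by case: (t0_no_post Ht H).
  + apply/Hfl; left; split => //; split; last by apply/eqP.
    by rewrite eq_sym; exact: (tr_neq_pl HPN Ht0 (edge_pt HPN H Ht)).
- have E : (t \in inp R) = (t \in inp N).
    have := @Hinp t; case: (t0 \in inp N) => /= E; apply/idP/idP.
    + by move/E => [[H _]|H] //; case: (disj_tr Hdis (inpM_tr H) (tr_node Ht)).
    + by move=> H; apply/E; left; split => //; apply/eqP.
    + by move/E.
    + by move/E.
  by rewrite E.
Qed.

Lemma trans_subst_postN t : uT (un N bN) t -> t <> t0 -> forall z,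
  upost (un R bN) t z = upost (un N bN) t z.
Proof.
move=> Ht Htt [y|c] /=.
- apply/idP/idP => [/Hfl [[H _]|[H|[[H _]|[H _]]]] //|H].
  + by case: (@Hdis t (tr_node Ht) (edge_node HPM H).1).
  + by case: (t0_no_pre Ht H).
  + by case: (disj_tr Hdis (outpM_tr H) (tr_node Ht)).
  + apply/Hfl; left; split => //; split; first by apply/eqP.
    by rewrite eq_sym; exact: (tr_neq_pl HPN Ht0 (edge_tp HPN H Ht)).
- have E : (t \in outp R) = (t \in outp N).
    have := @Hout t; case: (t0 \in outp N) => /= E; apply/idP/idP.
    + by move/E => [[H _]|H] //; case: (disj_tr Hdis (outpM_tr H) (tr_node Ht)).
    + by move=> H; apply/E; left; split => //; apply/eqP.
    + by move/E.
    + by move/E.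
  by rewrite E.
Qed.

Lemma trans_subst_inp z : uIN R bN z = ~~ inM_of M z && uIN N bN z.
Proof.
case: z => [x|c] //=; case Hb: bN; first by rewrite /= andbF.
have HI : (t0 \in inp N) = false.
  by apply/negbTE/negP => /t0_inp_flag; rewrite Hb.
have := @Hinp x; rewrite HI /= => E.
have -> : (x \in inp R) = (x \in inp N) by apply/idP/idP => /E.
case Hx: (x \in inp N); last by rewrite andbF.
case Hm: (x \in pl M) => //=.
by have := (proj1 HfN) x Hx; rewrite Hb => H; case: (disj_pl Hdis Hm (pl_node H)).
Qed.

Lemma trans_subst_outp z : uON R bN z = ~~ inM_of M z && uON N bN z.
Proof.
case: z => [x|c] //=; case Hb: bN; first by rewrite /= andbF.
have HO : (t0 \in outp N) = false.
  by apply/negbTE/negP => /t0_outp_flag; rewrite Hb.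
have := @Hout x; rewrite HO /= => E.
have -> : (x \in outp R) = (x \in outp N) by apply/idP/idP => /E.
case Hx: (x \in outp N); last by rewrite andbF.
case Hm: (x \in pl M) => //=.
by have := (proj2 HfN) x Hx; rewrite Hb => H; case: (disj_pl Hdis Hm (pl_node H)).
Qed.

Lemma trans_subst_sub : usub (un N bN) (uIN N bN) (uON N bN) ->
  usub (un M true) (uIN M true) (uON M true) -> usub (un R bN) (uIN R bN) (uON R bN).
Proof.
move=> HsN HsM.
apply: (@trans_comp (un R bN) (un N bN) (un M true) (uIN R bN) (uON R bN)
   (uIN N bN) (uON N bN) (inr false) (inr true) t0 (inM_of M)).
- move=> t; rewrite /=; split.
    by move/Htr => [[H1 /eqP H2]|H]; [left | right].
  by move=> [[H1 /eqP H2]|H]; apply/Htr; [left | right].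
- exact: Ht0.
- exact: trans_subst_preM.
- exact: trans_subst_postM.
- move=> t Ht [x|c] /=; split => H.
  + by left; apply: (edge_pt HPM H Ht).
  + by left; apply: (edge_tp HPM H Ht).
  + by right; move: H; case: c.
  + by right; move: H; case: c.
- by [].
- by [].
- by [].
- move=> t Ht [x|c] //= Hx; split; apply/negP => H.
  + exact: (disj_pl Hdis Hx (edge_node HPN H).1).
  + exact: (disj_pl Hdis Hx (edge_node HPN H).2).
- exact: trans_subst_preN.
- exact: trans_subst_postN.
- exact: trans_subst_inp.
- exact: trans_subst_outp.
- move=> [x|c] //= Hx; split; apply/negP => /andP [_ H].
  + exact: (disj_pl Hdis Hx (flag_inp_node HfN H)).
  + exact: (disj_pl Hdis Hx (flag_outp_node HfN H)).
- exact: HsN.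
- by apply: usub_ext HsM _ _ => [[x|[]]|[x|[]]].
- exact: (wf_post (proj1 HwM) (tWF_flagok HwM)).
Qed.

End TransSubst.

Lemma trans_glue N M t0 R : Good N -> Good M -> disjoint_nets N M -> t0 \in tr N ->
  tWF M -> is_subst_trans N M t0 R -> Good R.
Proof.
move=> [HPN [bN [HfN HsN]]] [HPM [bM [HfM HsM]]] Hdis Ht0 HwM [Hpl [Htr [Hfl [Hinp Hout]]]].
have EbM := tWF_flag HwM HfM; subst bM.
split; first exact: (trans_subst_petri HPN HPM HwM Hdis Ht0 Hpl Htr Hfl).
exists bN; split; first exact: (trans_subst_flagok HPN HfN HwM Ht0 Hpl Htr Hinp Hout).
exact: (trans_subst_sub HPN HfN HPM HwM Hdis Ht0 Htr Hfl Hinp Hout HsN HsM).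
Qed.

Definition classic_bool (P : Prop) : bool :=
  if excluded_middle_informative P then true else false.
Lemma classic_boolP (P : Prop) : classic_bool P <-> P.
Proof. by rewrite /classic_bool; case: excluded_middle_informative. Qed.

Lemma sum_count (s : seq nat) (P : pred nat) : \sum_(t <- s) (P t : nat) = count P s.
Proof. by elim: s => [|a s IH]; rewrite ?big_nil ?big_cons //= IH. Qed.

Lemma mem_preset N x t : (x \in preset N t) = ((x, t) \in fl N).
Proof.
rewrite /preset mem_undup; apply/mapP/idP => [[e He ->]|H].
  by move: He; rewrite mem_filter => /andP [/eqP <- ]; case: e.
by exists (x, t) => //; rewrite mem_filter eqxx.
Qed.
Lemma mem_postset N x t : (x \in postset N t) = ((t, x) \in fl N).
Proof.
rewrite /postset mem_undup; apply/mapP/idP => [[e He ->]|H].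
  by move: He; rewrite mem_filter => /andP [/eqP <- ]; case: e.
by exists (t, x) => //; rewrite mem_filter eqxx.
Qed.

Lemma size1 (s : seq nat) : size (undup s) = 1 -> exists a, forall x, (x \in s) = (x == a).
Proof.
case E: (undup s) => [|a [|b l]] // _; exists a => x.
by rewrite -mem_undup E inE.
Qed.
Lemma count_le (P Q : pred nat) s : (forall y, y \in s -> P y -> Q y) -> count P s <= count Q s.
Proof.
elim: s => //= a s IH H; apply: leq_add; last by apply: IH => y Hy; apply: H; rewrite inE Hy orbT.
by case HP: (P a) => //; rewrite (H a) ?inE ?eqxx.
Qed.

Lemma count_lt (P Q : pred nat) s : (forall y, y \in s -> P y -> Q y) ->
  forall y, y \in s -> Q y -> ~~ P y -> count P s < count Q s.
Proof.
elim: s => //= a s IH H y; rewrite inE => /orP [/eqP ->|Hy] HQ HP.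
  rewrite (negbTE HP) HQ add0n add1n ltnS; apply: count_le => z Hz; apply: H.
  by rewrite inE Hz orbT.
have := IH (fun z Hz => H z (ltac:(by rewrite inE Hz orbT))) y Hy HQ HP.
case HPa: (P a); last by move=> /leq_trans; apply; apply: leq_addl.
by rewrite (H a) ?inE ?eqxx //= !add1n ltnS.
Qed.

(* AND nets are acyclic marked graphs; for flag true the one-input /
   one-output condition makes the fresh places balanced too. *)
Section ANDbase.
Variable N : net.
Variable b : bool.
Hypothesis HA : AND_net N.
Hypothesis HW : wf_common N.
Hypothesis Hf : flagok b N.
Hypothesis H11 : b -> one_input N /\ one_output N.

Let HP : petri N := proj1 HW.

Lemma count_post x : x \in pl N ->
  count (fun t => (x, t) \in fl N) (undup (tr N)) = size (postset N x).
Proof.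
move=> Hx; rewrite -size_filter; apply: perm_size; apply: uniq_perm.
- exact: filter_uniq (undup_uniq _).
- exact: undup_uniq.
- move=> y; rewrite mem_filter mem_undup mem_postset.
  by apply/idP/idP => [/andP [] //|H]; rewrite H (edge_from_place HP H Hx).
Qed.
Lemma count_pre x : x \in pl N ->
  count (fun t => (t, x) \in fl N) (undup (tr N)) = size (preset N x).
Proof.
move=> Hx; rewrite -size_filter; apply: perm_size; apply: uniq_perm.
- exact: filter_uniq (undup_uniq _).
- exact: undup_uniq.
- move=> y; rewrite mem_filter mem_undup mem_preset.
  by apply/idP/idP => [/andP [] //|H]; rewrite H (edge_to_place HP H Hx).
Qed.
Lemma count_nonplace_post x : x \notin pl N ->
  count (fun t => (x, t) \in fl N) (undup (tr N)) = 0.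
Proof.
move=> Hx; apply/eqP; rewrite -leqn0 -(count_pred0 (undup (tr N))).
apply: count_le => t; rewrite mem_undup => Ht H.
by rewrite (edge_pt HP H Ht) in Hx.
Qed.
Lemma count_nonplace_pre x : x \notin pl N ->
  count (fun t => (t, x) \in fl N) (undup (tr N)) = 0.
Proof.
move=> Hx; apply/eqP; rewrite -leqn0 -(count_pred0 (undup (tr N))).
apply: count_le => t; rewrite mem_undup => Ht H.
by rewrite (edge_tp HP H Ht) in Hx.
Qed.

Lemma count_inp : b -> count (fun t => t \in inp N) (undup (tr N)) = 1.
Proof.
move=> Hb; have [H1 _] := H11 Hb; rewrite -H1 -size_filter; apply: perm_size; apply: uniq_perm.
- exact: filter_uniq (undup_uniq _).
- exact: undup_uniq.
- move=> y; rewrite mem_filter !mem_undup.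
  by apply/idP/idP => [/andP [] //|H]; rewrite H; have := (proj1 Hf) y H; rewrite Hb.
Qed.
Lemma count_outp : b -> count (fun t => t \in outp N) (undup (tr N)) = 1.
Proof.
move=> Hb; have [_ H1] := H11 Hb; rewrite -H1 -size_filter; apply: perm_size; apply: uniq_perm.
- exact: filter_uniq (undup_uniq _).
- exact: undup_uniq.
- move=> y; rewrite mem_filter !mem_undup.
  by apply/idP/idP => [/andP [] //|H]; rewrite H; have := (proj2 Hf) y H; rewrite Hb.
Qed.

Definition rk (t : nat) : nat :=
  count (fun y => classic_bool (Defs.fpath N y t)) (undup (pl N ++ tr N)).

Lemma sum_tr (F : nat -> X -> bool) z :
  \sum_(t <- undup (tr N)) (F t z : nat) = count (fun t => F t z) (undup (tr N)).
Proof. exact: (sum_count _ (fun t => F t z)). Qed.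

Lemma and_balance z :
  uIN N b z + \sum_(t <- undup (tr N)) upostN N b t z = 1 /\
  uON N b z + \sum_(t <- undup (tr N)) upreN N b t z = 1 \/
  uIN N b z + \sum_(t <- undup (tr N)) upostN N b t z = 0 /\
  uON N b z + \sum_(t <- undup (tr N)) upreN N b t z = 0.
Proof.
have [_ [_ Hpl]] := HA.
case: z => [x|c].
- rewrite !sum_tr /=.
  case Hx: (x \in pl N).
  + left; rewrite count_post // count_pre //.
    have [[[HI ->]|[HI ->]] [[HO ->]|[HO ->]]] := Hpl x Hx.
    * case: (b) Hf => [[Hf1 _]|_]; last by rewrite HI HO.
      by have := pt_disj HP Hx (Hf1 x HI).
    * case: (b) Hf => [[Hf1 _]|_]; last by rewrite HI (negbTE HO).
      by have := pt_disj HP Hx (Hf1 x HI).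
    * case: (b) Hf => [[_ Hf2]|_]; last by rewrite (negbTE HI) HO.
      by have := pt_disj HP Hx (Hf2 x HO).
    * by rewrite (negbTE HI) (negbTE HO) !andbF.
  + right; rewrite count_nonplace_post ?Hx // count_nonplace_pre ?Hx //.
    case: (b) Hf => [//|[Hf1 Hf2]] /=.
    case HI: (x \in inp N); first by rewrite (Hf1 x HI) in Hx.
    by case HO: (x \in outp N) => //; rewrite (Hf2 x HO) in Hx.
- rewrite !sum_tr /=; case Hb: b; last first.
    by right; rewrite !(eq_count (a2 := pred0)) ?count_pred0 // => t; rewrite andbC.
  left; have Cx : forall s : seq nat, count xpred0 s = 0 by elim.
  case: c => /=; rewrite Cx.
  + by split => //; exact: (count_outp Hb).
  + by split => //; exact: (count_inp Hb).
Qed.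

Lemma rk_increasing t t' z : t \in undup (tr N) -> t' \in undup (tr N) ->
  upostN N b t' z -> upreN N b t z -> rk t' < rk t.
Proof.
have [Hac _] := HA.
case: z => [x|c] Ht Ht' /=; last by case: c; rewrite ?andbF.
move=> H1 H2; rewrite mem_undup in Ht; rewrite mem_undup in Ht'.
apply: (@count_lt _ _ _ _ t).
- move=> y _ /classic_boolP Hy; apply/classic_boolP; apply: fpath_trans Hy _.
  by apply: fpath_step H1 (fpath_step H2 (fpath_refl _ _)).
- by rewrite mem_undup mem_cat Ht orbT.
- by apply/classic_boolP; apply: fpath_refl.
- apply/negP => /classic_boolP Htt'.
  by apply: (Hac t' x H1); apply: fpath_step H2 Htt'.
Qed.

(* Every transition consumes a token: it is an input, or lies on a path
   from an input place. *)
Lemma and_pre_nonempty t : t \in undup (tr N) -> exists z, upreN N b t z.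
Proof.
rewrite mem_undup => Ht.
have Hpath : t \notin inp N -> exists z, upreN N b t z.
  move=> HtI; case: HW => [_ [_ [_ [Hin _]]]]; case: (Hin t); first by rewrite /node Ht orbT.
  move=> i Hi Hp; have Hne : i <> t by move=> E; subst; rewrite Hi in HtI.
  by case: (fpath_last Hp Hne) => y Hy; exists (inl y).
case HtI: (t \in inp N); last by apply: Hpath; rewrite HtI.
case Hb: b; first by exists (inr false); rewrite /= HtI.
by have := (proj1 Hf) t HtI; rewrite Hb => Hpt; case: (pt_disj HP Hpt Ht).
Qed.

Lemma and_sub : usub (un N b) (uIN N b) (uON N b).
Proof.
apply: (@tnet_sub _ (undup (tr N)) _ _ rk).
- by move=> t; rewrite /= mem_undup.
- exact: undup_uniq.
- by move=> z; case: (and_balance z) => [[-> ->]|[-> ->]].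
- by move=> z; case: (and_balance z) => [[_ ->]|[_ ->]].
- exact: rk_increasing.
- exact: and_pre_nonempty.
Qed.
End ANDbase.

Lemma step_delta (U : unet) t (a c : X) : uT U t -> (forall z, upre U t z = (z == a)) ->
  (forall z, upost U t z = (z == c)) ->
  ustep U (fun z => (z == a) : nat) (fun z => (z == c) : nat).
Proof.
move=> Ht Ha Hc; exists t => //; split => z; rewrite Ha ?Hc //.
by case: (z == a); case: (z == c).
Qed.

(* OR nets are state machines whose every position can reach the output. *)
Section ORbase.
Variable N : net.
Variable b : bool.
Hypothesis HO : OR_net N.
Hypothesis HW : wf_common N.
Hypothesis Hf : flagok b N.
Hypothesis H11 : ~~ b -> one_input N /\ one_output N.
Let HP : petri N := proj1 HW.

Lemma charOR t : t \in tr N ->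
  (exists a, forall z, upreN N b t z = (z == a)) /\ (exists c, forall z, upostN N b t z = (z == c)).
Proof.
move=> Ht; have [_ Hcond] := HO; case: (Hcond t Ht) => Hpre Hpost; split.
- case: Hpre => [[HI H0]|[HI H1]].
  + have Hb : b by case: (b) Hf => // [[Hf1 _]]; case: (pt_disj HP (Hf1 t HI) Ht).
    exists (inr false) => [[x|c]] /=.
      by rewrite -mem_preset (size0nil H0).
    by rewrite Hb HI andbT; case: c.
  + move: H1; case E: (preset N t) => [|a [|]] // _.
    exists (inl a) => [[x|c]] /=.
      by rewrite -mem_preset E inE inl_eqE.
    by rewrite (negbTE HI) andbF.
- case: Hpost => [[HI H0]|[HI H1]].
  + have Hb : b by case: (b) Hf => // [[_ Hf1]]; case: (pt_disj HP (Hf1 t HI) Ht).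
    exists (inr true) => [[x|c]] /=.
      by rewrite -mem_postset (size0nil H0).
    by rewrite Hb HI andbT; case: c.
  + move: H1; case E: (postset N t) => [|a [|]] // _.
    exists (inl a) => [[x|c]] /=.
      by rewrite -mem_postset E inE inl_eqE.
    by rewrite (negbTE HI) andbF.
Qed.

(* Reaching the output o: if it holds at the output nodes, it holds along
   every path leading to them, hence everywhere in the WF net. *)
Section ReachOutput.
Variable o : X.
Hypothesis Hbase : forall o', o' \in outp N ->
  (o' \in pl N -> good (un N b) o (inl o')) /\
  (o' \in tr N -> forall z, upostN N b o' z -> good (un N b) o z).

Lemma good_path u o' : Defs.fpath N u o' -> o' \in outp N ->
  (u \in pl N -> good (un N b) o (inl u)) /\
  (u \in tr N -> forall z, upostN N b u z -> good (un N b) o z).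
Proof.
elim=> [x|x y z0 H _ IH] Ho; first exact: Hbase.
have [IH1 IH2] := IH Ho.
split => Hx.
- have Hy := edge_from_place HP H Hx.
  case: (charOR Hy) => [[a Ha] [c Hc]].
  have Ea : a = inl x by apply/eqP; rewrite eq_sym -Ha /=.
  subst a; apply: ur_step (step_delta (U := un N b) Hy Ha Hc) _.
  by apply: IH2 => //; rewrite Hc eqxx.
- move=> z; case: (charOR Hx) => [_ [c Hc]].
  have Ec : c = inl y by apply/eqP; rewrite eq_sym -Hc /=.
  subst c; rewrite Hc => /eqP ->; apply: IH1.
  exact: (edge_tp HP H Hx).
Qed.

Lemma good_tr t : t \in tr N -> forall z, upostN N b t z -> good (un N b) o z.
Proof.
move=> Ht; have [_ [_ [_ [_ Hout]]]] := HW.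
case: (Hout t); first by rewrite /node Ht orbT.
by move=> o' Ho' Hp; apply: (good_path Hp Ho').2.
Qed.

Lemma good_pl x : x \in pl N -> good (un N b) o (inl x).
Proof.
move=> Hx; have [_ [_ [_ [_ Hout]]]] := HW.
case: (Hout x); first by rewrite /node Hx.
by move=> o' Ho' Hp; apply: (good_path Hp Ho').1.
Qed.

Lemma or_sub_gen (i : X) : good (un N b) o i ->
  usub (un N b) (fun z => z == i) (fun z => z == o).
Proof.
move=> Hi; apply: snet_sub => // t Ht.
case: (charOR Ht) => [[a Ha] [c Hc]]; exists a, c; split => //.
by apply: (good_tr Ht); rewrite Hc.
Qed.
End ReachOutput.

Lemma or_sub_trans : b = true -> usub (un N b) (uIN N b) (uON N b).
Proof.
move=> Hb.
have Hbase : forall o', o' \in outp N ->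
  (o' \in pl N -> good (un N b) (inr true) (inl o')) /\
  (o' \in tr N -> forall z, upostN N b o' z -> good (un N b) (inr true) z).
  move=> o' Ho'; split => Ho2.
    by have := (proj2 Hf) o' Ho'; rewrite Hb => H; case: (pt_disj HP Ho2 H).
  move=> z; case: (charOR Ho2) => [_ [c Hc]].
  have Ec : c = inr true by apply/eqP; rewrite eq_sym -Hc /= Hb Ho'.
  by subst c; rewrite Hc => /eqP ->; apply: ur_refl.
have [_ [[ti Hti] _]] := HW.
have Hti' : ti \in tr N by have := (proj1 Hf) ti Hti; rewrite Hb.
have Hi : good (un N b) (inr true) (inr false).
  case: (charOR Hti') => [[a Ha] [c Hc]].
  have Ea : a = inr false by apply/eqP; rewrite eq_sym -Ha /= Hb Hti.
  subst a; apply: ur_step (step_delta (U := un N b) Hti' Ha Hc) _.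
  by apply: (good_tr Hbase Hti'); rewrite Hc eqxx.
apply: usub_ext (or_sub_gen Hbase Hi) _ _ => [[x|[]]|[x|[]]] //=; by rewrite Hb.
Qed.

Lemma or_sub_place : b = false -> usub (un N b) (uIN N b) (uON N b).
Proof.
move=> Hb.
have [HI1 HO1] := H11 (negbT Hb).
case: (size1 HI1) => i0 Ei; case: (size1 HO1) => o0 Eo.
have Hbase : forall o', o' \in outp N ->
  (o' \in pl N -> good (un N b) (inl o0) (inl o')) /\
  (o' \in tr N -> forall z, upostN N b o' z -> good (un N b) (inl o0) z).
  move=> o' Ho'; split => Ho2.
    by rewrite Eo in Ho'; rewrite (eqP Ho'); apply: ur_refl.
  by have := (proj2 Hf) o' Ho'; rewrite Hb => H; case: (pt_disj HP H Ho2).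
have Hi0 : i0 \in pl N by have := (proj1 Hf) i0; rewrite Ei eqxx Hb => H; apply: H.
have Hi := good_pl Hbase Hi0.
apply: usub_ext (or_sub_gen Hbase Hi) _ _ => [[x|c]|[x|c]] //=;
  by rewrite Hb /= ?Ei ?Eo.
Qed.

Lemma or_sub : usub (un N b) (uIN N b) (uON N b).
Proof.
case: (b =P true) => [Hb|/negP/negbTE Hb]; first exact: or_sub_trans Hb.
exact: or_sub_place Hb.
Qed.
End ORbase.

Lemma base_good N : AND_OR_base N -> Good N.
Proof.
case=> [[HA HwP]|[[HA [HwT [H1 H2]]]|[[HO [HwP [H1 H2]]]|[HO HwT]]]].
- split; first exact: (proj1 (proj1 HwP)).
  exists false; split; first exact: pWF_flagok.
  by apply: and_sub HA (proj1 HwP) (pWF_flagok HwP) _.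
- split; first exact: (proj1 (proj1 HwT)).
  exists true; split; first exact: tWF_flagok.
  by apply: and_sub HA (proj1 HwT) (tWF_flagok HwT) _.
- split; first exact: (proj1 (proj1 HwP)).
  exists false; split; first exact: pWF_flagok.
  by apply: or_sub HO (proj1 HwP) (pWF_flagok HwP) _.
- split; first exact: (proj1 (proj1 HwT)).
  exists true; split; first exact: tWF_flagok.
  by apply: or_sub HO (proj1 HwT) (tWF_flagok HwT) _.
Qed.

Lemma sclos_good N : AND_OR_net N -> Good N.
Proof.
elim=> [R HR|N' M p R _ HN _ HM Hd Hp HwM HS|N' M t R _ HN _ HM Hd Ht HwM HS].
- exact: base_good.
- exact: (place_glue HN HM Hd Hp HwM HS).
- exact: (trans_glue HN HM Hd Ht HwM HS).
Qed.

Unset Implicit Arguments.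
Theorem mainTheorem20 (N : net) : AND_OR_net N -> subsound N.
Proof.
move=> /sclos_good [HP [b [Hf Hs]]]; split => Hw.
- have Eb := pWF_flag Hw Hf; subst b; exact: conv_false Hs.
- have Eb := tWF_flag Hw Hf; subst b; exact: conv_true HP Hs.
Qed.
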